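(* Let $f:S^1\to S^1$, $f(z)=2z\pmod 1$, let $\tau:S^1\to\mathbb{R}$ be $C^\infty$, and couple $\nu=1/\hbar$. Fix $(x,\xi)\in S^1\times\mathbb{R}$. Then, as $\hbar=1/\nu\to 0$, the family $\phi_\hbar(z)=\hat F_\nu(\varphi_{x,\xi})(z)=\varphi_{x,\xi}(f(z))\,e^{i\tau(z)/\hbar}$ has micro-support contained in $\{G_1(x,\xi),G_2(x,\xi)\}\subset S^1\times\mathbb{R}$, where $G_1,G_2$ are the two inverse branches of $F(z,s)=\big(f(z),\tfrac12 s-\tfrac12\tau'(z)\big)$, namely $G_j(x,\xi)=(y_j,\,2\xi+\tau'(y_j))$ with $y_1=\tfrac{x}{2}$, $y_2=\tfrac{x}{2}+\tfrac12$. Equivalently: if $f(y)\neq x$, or $f(y)=x$ and $\eta\neq 2\xi+\tau'(y)$, then $(y,\eta)$ is not in the micro-support.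
   Context: $S^1=\mathbb{R}/\mathbb{Z}$ is identified with $[0,1)$; $\hbar>0$ is a small parameter. For $(x,\xi)\in\mathbb{R}^2$ the periodic Gaussian wavepacket is $\varphi_{x,\xi}(z)=\sum_{k\in\mathbb{Z}}e^{\frac{i\xi(z-k)}{\hbar}}e^{-\frac{(z-k-x)^2}{4\hbar}}$. Inner product: $\langle u,v\rangle=\int_0^1\overline{u(z)}\,v(z)\,dz$. A quantity $q(\hbar)$ is $O(\hbar^\infty)$ if for every $N>0$ there are $C_N,\delta>0$ with $|q(\hbar)|\le C_N\hbar^N$ for $0<\hbar\le\delta$. A family $\phi_\hbar\in L^2(S^1)$ is micro-locally small near $(x_0,\xi_0)\in S^1\times\mathbb{R}$ if $|\langle\varphi_{y,\eta},\phi_\hbar\rangle|$ is $O(\hbar^\infty)$ uniformly for $(y,\eta)$ in a neighbourhood of $(x_0,\xi_0)$; the micro-support of $\phi_\hbar$ is the set of points near which it is not micro-locally small. The operator $\hat F_\nu$ is $\hat F_\nu(\varphi)(z)=\varphi(f(z))\,e^{i\nu\tau(z)}$. *)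

From Stdlib Require Import Reals Lra ClassicalEpsilon.
Open Scope R_scope.

Definition Cx := (R * R)%type.
Definition cmod (c : Cx) : R := sqrt (fst c ^ 2 + snd c ^ 2).
Definition cmul (a b : Cx) : Cx :=
  (fst a * fst b - snd a * snd b, fst a * snd b + snd a * fst b).
Definition cconj (a : Cx) : Cx := (fst a, - snd a).
Definition cexpi (th : R) : Cx := (cos th, sin th).

(** Limit of a real sequence (chosen classically; it is THE limit when the
    sequence converges, since limits are unique). *)
Definition lim_seq (u : nat -> R) : R :=
  epsilon (inhabits 0) (fun l => Un_cv u l).

(** Riemann integral over [a,b] (THE integral when f is Riemann integrable). *)
Definition Rint (f : R -> R) (a b : R) : R :=
  epsilon (inhabits 0)
    (fun l => exists pr : Riemann_integrable f a b, RiemannInt pr = l).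

Definition symsum (g : R -> R) (n : nat) : R :=
  sum_f_R0 (fun j => g (INR j - INR n)) (2 * n).

Definition wp_term (hbar x xi z k : R) : Cx :=
  let a := exp (- (z - k - x) ^ 2 / (4 * hbar)) in
  (a * cos (xi * (z - k) / hbar), a * sin (xi * (z - k) / hbar)).

(** Periodic Gaussian wavepacket phi_{x,xi}(z) = sum_{k in Z} wp_term,
    as the limit of the symmetric partial sums (absolutely convergent). *)
Definition wavepacket (hbar x xi : R) (z : R) : Cx :=
  (lim_seq (symsum (fun k => fst (wp_term hbar x xi z k))),
   lim_seq (symsum (fun k => snd (wp_term hbar x xi z k)))).

Definition inner (u v : R -> Cx) : Cx :=
  (Rint (fun z => fst (cmul (cconj (u z)) (v z))) 0 1,
   Rint (fun z => snd (cmul (cconj (u z)) (v z))) 0 1).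

(** The doubling map f(z) = 2z mod 1 on S^1 = [0,1) *)
Definition doubling (z : R) : R := frac_part (2 * z).

Definition smooth (tau : R -> R) : Prop :=
  exists D : nat -> R -> R,
    D 0%nat = tau /\ forall n z, derivable_pt_lim (D n) z (D (S n) z).

Definition Fhat (tau : R -> R) (nu : R) (phi : R -> Cx) (z : R) : Cx :=
  cmul (phi (doubling z)) (cexpi (nu * tau z)).

Definition microlocally_small (phi : R -> R -> Cx) (x0 xi0 : R) : Prop :=
  exists r : R, 0 < r /\
    forall N : nat, exists C delta : R, 0 < delta /\
      forall hbar y eta, 0 < hbar <= delta ->
        Rabs (y - x0) < r -> Rabs (eta - xi0) < r ->
        cmod (inner (wavepacket hbar y eta) (phi hbar)) <= C * hbar ^ N.

Definition in_microsupport (phi : R -> R -> Cx) (x0 xi0 : R) : Prop :=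
  ~ microlocally_small phi x0 xi0.

(* The coefficient <phi_{y',eta'}, F phi_{x,xi}> is the integral over one period of
   conj(phi_{y',eta'}(z)) phi_{x,xi}(2z) e^{i tau(z)/hbar}.  Up to an error O(e^{-c/hbar}) each
   periodic wavepacket may be replaced by its dominant Gaussian term, centred at y' and at (x + j)/2
   respectively, and the product of these terms is e^{Phi(z)/hbar} with
     Phi(z) = -((z - y')^2 + (2z - x - j)^2)/4 + i (-eta' z + xi (2z - j) + tau z).
   If 2y <> x mod 1, the two centres stay apart for (y', eta') near (y, eta), so the whole integrand
   is O(e^{-c/hbar}).  If 2y = x + j, then Phi' does not vanish as long as eta' is near
   eta <> 2 xi + tau'(y), and N integrations by parts on [y - 1/2, y + 1/2] give O(hbar^N); the
   boundary terms are O(e^{-1/(4 hbar)}) because Re Phi <= -1/4 at both endpoints. *)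

From Coquelicot Require Import Coquelicot.
From Stdlib Require Import Reals Lra Lia ZArith ClassicalEpsilon.
Open Scope R_scope.

Lemma lim_seq_unique u l : Un_cv u l -> lim_seq u = l.
Proof.
  intros H. unfold lim_seq.
  pose proof (epsilon_spec (inhabits 0) (fun l => Un_cv u l) (ex_intro _ l H)) as H2.
  exact (UL_sequence u _ _ H2 H).
Qed.

Lemma Rint_RInt f a b : ex_RInt f a b -> Rint f a b = RInt f a b.
Proof.
  intros H. pose proof (ex_RInt_Reals_0 f a b H) as pr.
  unfold Rint.
  pose proof (epsilon_spec (inhabits 0)
    (fun l => exists pr : Riemann_integrable f a b, RiemannInt pr = l)
    (ex_intro _ (RiemannInt pr) (ex_intro _ pr eq_refl))) as [pr' Hp].
  rewrite <- Hp. symmetry. apply RInt_Reals.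
Qed.

Lemma half_pow_pos n : 0 < (1/2)^n.
Proof. apply pow_lt. lra. Qed.

Lemma half_pow_lt_eps K eps : 0 < K -> 0 < eps -> exists N, forall n, (N <= n)%nat -> K * (1/2)^n < eps.
Proof.
  intros HK Heps.
  destruct (pow_lt_1_zero (1/2) ltac:(rewrite Rabs_pos_eq; lra) (eps / K)
    ltac:(apply Rdiv_lt_0_compat; lra)) as [N HN].
  exists N. intros n Hn. specialize (HN n Hn).
  rewrite Rabs_pos_eq in HN by (left; apply half_pow_pos).
  apply Rmult_lt_compat_l with (r := K) in HN; auto.
  replace (K * (eps / K)) with eps in HN by (field; lra). exact HN.
Qed.

Lemma eq0_of_le_half_pow a C : (forall n, Rabs a <= C * (1/2)^n) -> a = 0.
Proof.
  intros H. destruct (Req_dec a 0) as [e|ne]; auto. exfalso.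
  assert (Ha : 0 < Rabs a) by (apply Rabs_pos_lt; auto).
  assert (HC : 0 < C) by (specialize (H 0%nat); simpl in H; lra).
  destruct (half_pow_lt_eps C (Rabs a) HC Ha) as [N HN].
  specialize (HN N (le_n _)). specialize (H N). lra.
Qed.

Lemma pow2_mul_half_pow_ge1 V i : (i <= V)%nat -> 1 <= 2 ^ V * (1/2)^i.
Proof.
  intros H. replace V with (i + (V - i))%nat by lia. rewrite pow_add.
  replace (2 ^ i * 2 ^ (V - i) * (1 / 2) ^ i) with ((2 * (1/2))^i * 2^(V-i))
    by (rewrite Rpow_mult_distr; ring).
  replace (2 * (1/2)) with 1 by field. rewrite pow1.
  assert (1 <= 2 ^ (V - i)) by (apply pow_R1_Rle; lra). lra.
Qed.

Lemma half_pow_sub V i : (V <= i)%nat -> (1/2)^(i - V) = 2 ^ V * (1/2)^i.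
Proof.
  intros H. replace i with (V + (i - V))%nat at 2 by lia. rewrite pow_add.
  replace (2 ^ V * ((1 / 2) ^ V * (1 / 2) ^ (i - V))) with ((2 * (1/2))^V * (1/2)^(i-V))
    by (rewrite Rpow_mult_distr; ring).
  replace (2 * (1/2)) with 1 by field. rewrite pow1. ring.
Qed.

Lemma symsum_0 g : symsum g 0 = g 0.
Proof. unfold symsum. simpl. f_equal. ring. Qed.

Lemma symsum_S g n : symsum g (S n) = symsum g n + g (INR (S n)) + g (- INR (S n)).
Proof.
  unfold symsum. replace (2 * S n)%nat with (S (S (2*n))) by lia.
  rewrite decomp_sum by lia. rewrite Nat.pred_succ. rewrite tech5.
  rewrite (sum_eq (fun i => g (INR (S i) - INR (S n))) (fun j => g (INR j - INR n))).
  2:{ intros i _. f_equal. rewrite !S_INR. ring. }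
  replace (INR (S (S (2 * n))) - INR (S n)) with (INR (S n)).
  2:{ rewrite !S_INR, mult_INR. simpl. ring. }
  replace (INR 0 - INR (S n)) with (- INR (S n)) by (simpl; ring).
  ring.
Qed.

Lemma symsum_shift G n :
  symsum (fun k => G (k - 1)) n = symsum G n - G (INR n) + G (- INR n - 1).
Proof.
  induction n.
  - rewrite !symsum_0. simpl. replace (0 - 1) with (- 0 - 1) by ring. ring.
  - rewrite !symsum_S, IHn, S_INR.
    replace (INR n + 1 - 1) with (INR n) by ring.
    replace (- (INR n + 1)) with (- INR n - 1) by ring. ring.
Qed.

Definition geom_tail (g : R -> R) (K : R) : Prop :=
  forall i : nat, (1 <= i)%nat -> Rabs (g (INR i)) + Rabs (g (- INR i)) <= K * (1/2)^i.

Lemma symsum_cauchy g K : geom_tail g K ->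
  forall n m, (n <= m)%nat -> Rabs (symsum g m - symsum g n) <= K * ((1/2)^n - (1/2)^m).
Proof.
  intros H n m Hnm. induction Hnm.
  - replace (symsum g n - symsum g n) with 0 by ring. rewrite Rabs_R0. lra.
  - rewrite symsum_S.
    specialize (H (S m) ltac:(lia)).
    pose proof (Rabs_triang (symsum g m - symsum g n + g (INR (S m))) (g (- INR (S m)))).
    pose proof (Rabs_triang (symsum g m - symsum g n) (g (INR (S m)))).
    replace (symsum g m + g (INR (S m)) + g (- INR (S m)) - symsum g n) with
      (symsum g m - symsum g n + g (INR (S m)) + g (- INR (S m))) by ring.
    replace (K * ((1 / 2) ^ n - (1 / 2) ^ S m)) with
      (K * ((1 / 2) ^ n - (1 / 2) ^ m) + K * (1/2)^(S m)) by (cbn [pow]; field).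
    lra.
Qed.

Lemma symsum_cvg g K : geom_tail g K ->
  Un_cv (symsum g) (lim_seq (symsum g)) /\
  forall n, Rabs (lim_seq (symsum g) - symsum g n) <= K * (1/2)^n.
Proof.
  intros H.
  assert (HK : 0 <= K).
  { specialize (H 1%nat (le_n _)). pose proof (Rabs_pos (g (INR 1))).
    pose proof (Rabs_pos (g (- INR 1))). rewrite pow_1 in H. lra. }
  pose proof (symsum_cauchy g K H) as HC.
  assert (Hc : Cauchy_crit (symsum g)).
  { intros eps Heps. destruct (half_pow_lt_eps (K + 1) eps ltac:(lra) Heps) as [N HN].
    exists N. intros n m Hn Hm. unfold R_dist.
    assert (Hgen : forall a b, (N <= a)%nat -> (a <= b)%nat -> Rabs (symsum g b - symsum g a) < eps).
    { intros a b Ha Hab. eapply Rle_lt_trans. apply HC; auto.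
      specialize (HN a Ha). pose proof (half_pow_pos a). pose proof (half_pow_pos b).
      apply Rle_lt_trans with ((K + 1) * (1/2)^a); [nra | exact HN]. }
    destruct (Compare_dec.le_lt_dec n m).
    + rewrite Rabs_minus_sym. apply Hgen; lia.
    + apply Hgen; lia. }
  destruct (R_complete _ Hc) as [l Hl].
  rewrite (lim_seq_unique _ _ Hl). split; auto.
  intros n. apply Rle_plus_epsilon. intros eps Heps.
  destruct (Hl eps Heps) as [N HN].
  specialize (HN (max n N) ltac:(lia)). unfold R_dist in HN.
  specialize (HC n (max n N) ltac:(lia)).
  pose proof (half_pow_pos (max n N)).
  pose proof (Rabs_triang (symsum g (max n N) - symsum g n) (- (symsum g (max n N) - l))).
  rewrite Rabs_Ropp in H1.
  replace (symsum g (max n N) - symsum g n + - (symsum g (max n N) - l)) with (l - symsum g n) in H1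
    by ring.
  nra.
Qed.

Lemma symsum_lim_sub_center g K : geom_tail g K -> Rabs (lim_seq (symsum g) - g 0) <= K.
Proof.
  intros H. destruct (symsum_cvg g K H) as [_ H2]. specialize (H2 0%nat).
  rewrite symsum_0 in H2. simpl in H2. lra.
Qed.

Definition cadd (a b : Cx) : Cx := (fst a + fst b, snd a + snd b).
Definition csub (a b : Cx) : Cx := (fst a - fst b, snd a - snd b).
Definition cinv (a : Cx) : Cx :=
  (fst a / (fst a ^ 2 + snd a ^ 2), - snd a / (fst a ^ 2 + snd a ^ 2)).

(* The l1 norm |Re| + |Im| dominates [cmod] and is easier to push through sums and products. *)
Definition cnorm1 (c : Cx) : R := Rabs (fst c) + Rabs (snd c).

Lemma cnorm1_ge0 c : 0 <= cnorm1 c.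
Proof. unfold cnorm1. pose proof (Rabs_pos (fst c)); pose proof (Rabs_pos (snd c)); lra. Qed.

Lemma cmod_le_cnorm1 c : cmod c <= cnorm1 c.
Proof.
  unfold cmod, cnorm1. destruct c as [a b]; simpl.
  pose proof (Rabs_pos a); pose proof (Rabs_pos b).
  rewrite <- (sqrt_pow2 (Rabs a + Rabs b)) by lra.
  apply sqrt_le_1_alt.
  pose proof (Rsqr_abs a); pose proof (Rsqr_abs b); unfold Rsqr in *. nra.
Qed.

Lemma cnorm1_cadd a b : cnorm1 (cadd a b) <= cnorm1 a + cnorm1 b.
Proof.
  unfold cnorm1, cadd; simpl. pose proof (Rabs_triang (fst a) (fst b)).
  pose proof (Rabs_triang (snd a) (snd b)). lra.
Qed.

Lemma cnorm1_le_csub_add a b : cnorm1 a <= cnorm1 (csub a b) + cnorm1 b.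
Proof.
  unfold cnorm1, csub; simpl.
  pose proof (Rabs_triang (fst a - fst b) (fst b)). pose proof (Rabs_triang (snd a - snd b) (snd b)).
  replace (fst a - fst b + fst b) with (fst a) in H by ring.
  replace (snd a - snd b + snd b) with (snd a) in H0 by ring.
  lra.
Qed.

Lemma cnorm1_cmul a b : cnorm1 (cmul a b) <= cnorm1 a * cnorm1 b.
Proof.
  unfold cnorm1, cmul. destruct a as [a1 a2], b as [b1 b2]; simpl.
  pose proof (Rabs_triang (a1*b1) (- (a2*b2))).
  pose proof (Rabs_triang (a1*b2) (a2*b1)).
  rewrite Rabs_Ropp in H. rewrite !Rabs_mult in H, H0.
  unfold Rminus. nra.
Qed.

Lemma cnorm1_cconj a : cnorm1 (cconj a) = cnorm1 a.
Proof. unfold cnorm1, cconj; simpl. rewrite Rabs_Ropp. ring. Qed.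

Lemma cnorm1_cexpi t : cnorm1 (cexpi t) <= 2.
Proof.
  unfold cnorm1, cexpi; simpl.
  pose proof (COS_bound t). pose proof (SIN_bound t).
  unfold Rabs; repeat destruct Rcase_abs; lra.
Qed.

Lemma cnorm1_cinv a c0 : 0 < c0 -> (c0 <= Rabs (fst a) \/ c0 <= Rabs (snd a)) ->
  cnorm1 (cinv a) <= 2 / c0.
Proof.
  destruct a as [p q]; unfold cnorm1, cinv; cbn [fst snd]. intros Hc H.
  rewrite <- (pow2_abs p), <- (pow2_abs q).
  pose proof (Rabs_pos p); pose proof (Rabs_pos q).
  set (n := Rabs p ^ 2 + Rabs q ^ 2).
  assert (Hn : 0 < n) by (unfold n; destruct H; nra).
  unfold Rdiv. rewrite !Rabs_mult, Rabs_Ropp, (Rabs_pos_eq (/ n)) by (left; apply Rinv_0_lt_compat; auto).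
  apply Rmult_le_reg_r with (n * c0). nra.
  replace ((Rabs p * / n + Rabs q * / n) * (n * c0)) with ((Rabs p + Rabs q) * c0) by (field; lra).
  replace (2 * / c0 * (n * c0)) with (2 * n) by (field; lra).
  unfold n. pose proof (pow2_ge_0 (Rabs p - Rabs q)). destruct H; nra.
Qed.

Lemma cmul_1l a : cmul (1, 0) a = a.
Proof. destruct a; unfold cmul; simpl; f_equal; ring. Qed.

Lemma cinv_mul a : fst a ^ 2 + snd a ^ 2 <> 0 -> cmul (cinv a) a = (1, 0).
Proof. destruct a as [p q]; unfold cmul, cinv; simpl; intros H; f_equal; field; auto; lra. Qed.

Lemma exp_neg_div_le q q' h : 0 < h -> q' <= q -> exp (- q / h) <= exp (- q' / h).
Proof.
  intros Hh H. destruct H as [H|H].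
  - left. apply exp_increasing. unfold Rdiv. apply Rmult_lt_compat_r.
    apply Rinv_0_lt_compat; auto. lra.
  - rewrite H; lra.
Qed.

Lemma exp_neg_div_le_half c h : 0 < h -> h <= c -> exp (- c / h) <= 1/2.
Proof.
  intros Hh Hc. eapply Rle_trans. apply (exp_neg_div_le c h h Hh Hc).
  replace (- h / h) with (- (1)) by (field; lra). rewrite exp_Ropp.
  pose proof (exp_ineq1 1 ltac:(lra)).
  apply Rle_trans with (/2). apply Rinv_le_contravar; lra. lra.
Qed.

Lemma exp_mult_INR a (j : nat) : exp (a * INR j) = (exp a)^j.
Proof.
  induction j. simpl. rewrite Rmult_0_r, exp_0. auto.
  rewrite S_INR. simpl. rewrite Rmult_plus_distr_l, Rmult_1_r, exp_plus, IHj. ring.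
Qed.

(* exp t >= (t/N)^N with t = c/h. *)
Lemma exp_neg_div_le_pow c h (N : nat) : 0 < c -> 0 < h ->
  exp (- c / h) <= (INR N / c) ^ N * h ^ N.
Proof.
  intros Hc Hh. rewrite <- Rpow_mult_distr. destruct N.
  - simpl. rewrite <- exp_0. left. apply exp_increasing.
    replace (- c / h) with (- (c / h)) by (field; lra).
    pose proof (Rdiv_lt_0_compat c h Hc Hh). lra.
  - set (n := INR (S N)). assert (Hn : 0 < n) by (apply lt_0_INR; lia).
    assert (E : exp (c / h) = (exp (c / (h * n)))^(S N)).
    { rewrite <- exp_mult_INR. f_equal. fold n. field. lra. }
    assert (Hg : (c / (h * n)) ^ (S N) <= exp (c / h)).
    { rewrite E. apply pow_incr. split.
      - apply Rlt_le, Rdiv_lt_0_compat; auto. apply Rmult_lt_0_compat; auto.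
      - pose proof (exp_ineq1 (c / (h * n))). destruct (Req_dec (c / (h * n)) 0) as [e|ne].
        + rewrite e, exp_0. lra.
        + specialize (H ne). lra. }
    replace (exp (- c / h)) with (/ exp (c / h)) by (rewrite <- exp_Ropp; f_equal; field; lra).
    replace (n / c * h) with (/ (c / (h * n))) by (field; lra).
    rewrite pow_inv.
    apply Rinv_le_contravar; auto. apply pow_lt. apply Rdiv_lt_0_compat; auto.
    apply Rmult_lt_0_compat; auto.
Qed.

Lemma exp_neg_div_geom q a b h (i L : nat) : 0 < h -> 0 <= b -> exp (- b / h) <= 1/2 ->
  a + b * INR (i - L) <= q -> exp (- q / h) <= exp (- a / h) * (2 ^ L * (1/2) ^ i).
Proof.
  intros Hh Hb Hq Hle.
  eapply Rle_trans. apply exp_neg_div_le with (q' := a + b * INR (i - L)); auto.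
  replace (- (a + b * INR (i - L)) / h) with (- a / h + (- b / h) * INR (i - L)) by (field; lra).
  rewrite exp_plus, exp_mult_INR.
  apply Rmult_le_compat_l. left; apply exp_pos.
  apply Rle_trans with ((1/2)^(i - L)).
  - apply pow_incr. split; auto. left; apply exp_pos.
  - destruct (Compare_dec.le_lt_dec L i) as [HL|HL].
    + rewrite half_pow_sub by lia; lra.
    + replace (i - L)%nat with 0%nat by lia. simpl. apply pow2_mul_half_pow_ge1. lia.
Qed.

(** * Periodic Gaussian wavepackets *)

Definition gauss (h x u k : R) : R := exp (- (u - k - x) ^ 2 / (4 * h)).

(* Scales at which consecutive periodic images of a Gaussian decay at least geometrically. *)
Definition small_hbar (h : R) : Prop := 0 < h /\ exp (- 1 / (4 * h)) <= 1/2.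

Lemma small_hbar_of h : 0 < h -> h <= 1/4 -> small_hbar h.
Proof.
  intros H1 H2. split; auto. replace (-1 / (4 * h)) with (- (1/4) / h) by (field; lra).
  apply exp_neg_div_le_half; lra.
Qed.

Lemma gauss_pos h x u k : 0 < gauss h x u k.
Proof. apply exp_pos. Qed.

Lemma gauss_le1 h x u k : 0 < h -> gauss h x u k <= 1.
Proof.
  intros Hh. unfold gauss. rewrite <- exp_0.
  replace 0 with (- 0 / (4 * h)) by (field; lra).
  apply exp_neg_div_le. lra. apply pow2_ge_0.
Qed.

Lemma gauss_eq h x u k : 0 < h -> gauss h x u k = exp (- ((u - k - x)^2 / 4) / h).
Proof. intros Hh. unfold gauss. f_equal. field. lra. Qed.

Lemma gauss_geom h x u (V i : nat) : small_hbar h -> Rabs (u - x) <= INR V ->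
  gauss h x u (INR i) <= 2 ^ V * (1/2)^i /\ gauss h x u (- INR i) <= 2 ^ V * (1/2)^i.
Proof.
  intros [Hh Hq] Hv.
  assert (Hsq : forall w, Rabs w <= INR V -> 0 + 1 * INR (i - V) <= (w - INR i) ^ 2).
  { intros w Hw. apply Rabs_le_between in Hw.
    destruct (Compare_dec.le_lt_dec i V) as [Hi|Hi].
    - replace (i - V)%nat with 0%nat by lia. simpl. pose proof (pow2_ge_0 (w - INR i)). lra.
    - rewrite minus_INR by lia. assert (1 <= INR i - INR V).
      { rewrite <- minus_INR by lia. replace 1 with (INR 1) by reflexivity. apply le_INR. lia. }
      nra. }
  assert (Hexp0 : exp (- 0 / (4 * h)) = 1) by (replace (- 0 / (4 * h)) with 0 by (field; lra); apply exp_0).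
  unfold gauss. split.
  - apply Rle_trans with (exp (- 0 / (4 * h)) * (2 ^ V * (1/2)^i)); [|rewrite Hexp0; lra].
    apply exp_neg_div_geom with (b := 1); [lra | lra | replace (- (1)) with (-1) by ring; exact Hq |].
    replace (u - INR i - x) with ((u - x) - INR i) by ring. apply Hsq; auto.
  - apply Rle_trans with (exp (- 0 / (4 * h)) * (2 ^ V * (1/2)^i)); [|rewrite Hexp0; lra].
    apply exp_neg_div_geom with (b := 1); [lra | lra | replace (- (1)) with (-1) by ring; exact Hq |].
    replace ((u - - INR i - x) ^ 2) with ((- (u - x) - INR i) ^ 2) by ring. apply Hsq. rewrite Rabs_Ropp; auto.
Qed.

(* A centred Gaussian at distance at most 3/4 from its centre has periodic images at distance >= 1/4. *)
Lemma gauss_center_tail h yy z (i : nat) : 0 < h -> exp (- (1/16) / h) <= 1/2 -> (1 <= i)%nat ->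
  Rabs (z - yy) <= 3/4 ->
  gauss h yy z (INR i) <= exp (- (1/64) / h) * (2 * (1/2)^i) /\
  gauss h yy z (- INR i) <= exp (- (1/64) / h) * (2 * (1/2)^i).
Proof.
  intros Hh Hq Hi Hz.
  assert (Hi1 : INR (i - 1) = INR i - 1) by (rewrite minus_INR by lia; auto).
  assert (HiR : 1 <= INR i) by (replace 1 with (INR 1) by auto; apply le_INR; lia).
  assert (Hgen : forall v, Rabs v <= 3/4 -> 1/64 + 1/16 * INR (i - 1) <= (v - INR i)^2 / 4).
  { intros v Hv. apply Rabs_le_between in Hv. rewrite Hi1. nra. }
  replace (2 * (1/2)^i) with (2 ^ 1 * (1/2)^i) by ring.
  rewrite !gauss_eq by auto. split.
  - apply exp_neg_div_geom with (b := 1/16); auto. lra.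
    replace (z - INR i - yy) with ((z - yy) - INR i) by ring. apply Hgen; auto.
  - apply exp_neg_div_geom with (b := 1/16); auto. lra.
    replace ((z - - INR i - yy) ^ 2) with ((- (z - yy) - INR i) ^ 2) by ring. apply Hgen.
    rewrite Rabs_Ropp; auto.
Qed.

Lemma sum_sq_ge z a c : 4/5 * (a - c/2)^2 <= (z - a)^2 + (2*z - c)^2.
Proof. pose proof (pow2_ge_0 (5*z - a - 2*c)). nra. Qed.

(* [(J + k + x)/2] is the centre of the k-th image of the Gaussian at [x] composed with
   [z |-> 2z - J]. *)
Lemma gauss_product_bound h x yy z J k beta (L i : nat) :
  0 < h -> 0 < beta -> exp (- (beta/10) / h) <= 1/2 ->
  beta + INR (i - L) / 2 <= Rabs (yy - (J + k + x)/2) ->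
  gauss h yy z 0 * gauss h x (2*z - J) k <= exp (- (beta^2/5) / h) * (2 ^ L * (1/2) ^ i).
Proof.
  intros Hh Hbeta Hq Hd.
  rewrite !gauss_eq by auto. rewrite <- exp_plus.
  replace (- ((z - 0 - yy) ^ 2 / 4) / h + - ((2 * z - J - k - x) ^ 2 / 4) / h) with
    (- (((z - yy)^2 + (2*z - (J + k + x))^2)/4) / h) by (field; lra).
  apply exp_neg_div_geom with (b := beta/10); auto. lra.
  pose proof (sum_sq_ge z yy (J + k + x)).
  set (d := yy - (J + k + x) / 2) in *.
  rewrite <- (pow2_abs d) in H.
  pose proof (pos_INR (i - L)).
  assert (beta * (beta + INR (i - L) / 2) <= Rabs d ^ 2) by nra.
  lra.
Qed.

Lemma wp_term_shift h x xi u k : wp_term h x xi (u + 1) k = wp_term h x xi u (k - 1).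
Proof. unfold wp_term. replace (u + 1 - k) with (u - (k - 1)) by ring. reflexivity. Qed.

Lemma Rabs_mult_trig_le a t : 0 < a -> Rabs (a * cos t) <= a /\ Rabs (a * sin t) <= a.
Proof.
  intros Ha. rewrite !Rabs_mult, (Rabs_pos_eq a) by lra.
  assert (Rabs (cos t) <= 1) by (pose proof (COS_bound t); unfold Rabs; destruct Rcase_abs; lra).
  assert (Rabs (sin t) <= 1) by (pose proof (SIN_bound t); unfold Rabs; destruct Rcase_abs; lra).
  split; nra.
Qed.

Lemma wp_term_fst_bound h x xi u k : Rabs (fst (wp_term h x xi u k)) <= gauss h x u k.
Proof. apply Rabs_mult_trig_le, gauss_pos. Qed.

Lemma wp_term_snd_bound h x xi u k : Rabs (snd (wp_term h x xi u k)) <= gauss h x u k.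
Proof. apply Rabs_mult_trig_le, gauss_pos. Qed.

Lemma cnorm1_wp_term h x xi u k : cnorm1 (wp_term h x xi u k) <= 2 * gauss h x u k.
Proof.
  unfold cnorm1. pose proof (wp_term_fst_bound h x xi u k). pose proof (wp_term_snd_bound h x xi u k).
  lra.
Qed.

Lemma continuity_pt_fid x : continuity_pt (fun z => z) x.
Proof. apply derivable_continuous_pt, derivable_pt_id. Qed.

Lemma continuity_pt_fconst c x : continuity_pt (fun _ => c) x.
Proof. apply continuity_pt_const. intros a b; reflexivity. Qed.

Lemma continuity_pt_cos_comp f x : continuity_pt f x -> continuity_pt (fun z => cos (f z)) x.
Proof. intros H. apply (continuity_pt_comp f cos); auto. apply continuity_cos. Qed.

Lemma continuity_pt_sin_comp f x : continuity_pt f x -> continuity_pt (fun z => sin (f z)) x.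
Proof. intros H. apply (continuity_pt_comp f sin); auto. apply continuity_sin. Qed.

Lemma continuity_pt_exp_comp f x : continuity_pt f x -> continuity_pt (fun z => exp (f z)) x.
Proof.
  intros H. apply (continuity_pt_comp f exp); auto. apply derivable_continuous_pt, derivable_pt_exp.
Qed.

Ltac continuity_pt_auto := repeat first
  [ apply continuity_pt_plus | apply continuity_pt_minus | apply continuity_pt_mult
  | apply continuity_pt_opp | apply continuity_pt_cos_comp | apply continuity_pt_sin_comp
  | apply continuity_pt_exp_comp | apply continuity_pt_fid | apply continuity_pt_fconst
  | assumption ].

Section WavepacketComponent.

(* [p] is [fst] or [snd]: the two real components are handled uniformly. *)
Variable p : Cx -> R.
Hypothesis p_wp_term_bound : forall h x xi u k, Rabs (p (wp_term h x xi u k)) <= gauss h x u k.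

Definition wp_comp (h x xi u : R) : R := lim_seq (symsum (fun k => p (wp_term h x xi u k))).

Lemma wp_comp_approx h x xi u V n : small_hbar h -> Rabs (u - x) <= INR V ->
  Rabs (wp_comp h x xi u - symsum (fun k => p (wp_term h x xi u k)) n) <= 2 * 2 ^ V * (1/2)^n.
Proof.
  intros Hs Hv. apply symsum_cvg.
  intros i _. destruct (gauss_geom h x u V i Hs Hv).
  pose proof (p_wp_term_bound h x xi u (INR i)). pose proof (p_wp_term_bound h x xi u (- INR i)).
  lra.
Qed.

Lemma wp_comp_periodic h x xi u : small_hbar h -> wp_comp h x xi (u + 1) = wp_comp h x xi u.
Proof.
  intros Hs. destruct (INR_unbounded (Rabs (u - x) + 1)) as [V HV].
  assert (HV0 : Rabs (u - x) <= INR V) by lra.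
  assert (HV1 : Rabs (u + 1 - x) <= INR V).
  { replace (u + 1 - x) with ((u - x) + 1) by ring.
    pose proof (Rabs_triang (u - x) 1). rewrite Rabs_R1 in H. lra. }
  apply Rminus_diag_uniq, (eq0_of_le_half_pow _ (6 * 2 ^ V)). intros n.
  pose proof (wp_comp_approx h x xi (u + 1) V n Hs HV1) as A1.
  pose proof (wp_comp_approx h x xi u V n Hs HV0) as A0.
  rewrite Rabs_minus_sym in A0.
  assert (E : symsum (fun k => p (wp_term h x xi (u + 1) k)) n =
      symsum (fun k => p (wp_term h x xi u k)) n - p (wp_term h x xi u (INR n))
        + p (wp_term h x xi u (- INR n - 1))).
  { rewrite <- symsum_shift. unfold symsum. apply sum_eq. intros. rewrite wp_term_shift. auto. }
  rewrite E in A1.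
  destruct (gauss_geom h x u V n Hs HV0) as [G1 _].
  destruct (gauss_geom h x u V (S n) Hs HV0) as [_ G2].
  rewrite S_INR in G2. replace (- (INR n + 1)) with (- INR n - 1) in G2 by ring.
  pose proof (p_wp_term_bound h x xi u (INR n)). pose proof (p_wp_term_bound h x xi u (- INR n - 1)).
  assert ((1/2)^(S n) <= (1/2)^n) by (simpl; pose proof (half_pow_pos n); lra).
  pose proof (pow_lt 2 V ltac:(lra)).
  set (a := p (wp_term h x xi u (INR n))) in *.
  set (b := p (wp_term h x xi u (- INR n - 1))) in *.
  set (S0 := symsum (fun k => p (wp_term h x xi u k)) n) in *.
  assert (Rabs (b - a) <= Rabs b + Rabs a)
    by (unfold Rminus; rewrite <- (Rabs_Ropp a); apply Rabs_triang).
  pose proof (Rabs_triang (wp_comp h x xi (u + 1) - (S0 - a + b)) ((S0 - wp_comp h x xi u) + (b - a))).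
  pose proof (Rabs_triang (S0 - wp_comp h x xi u) (b - a)).
  replace (wp_comp h x xi (u + 1) - (S0 - a + b) + (S0 - wp_comp h x xi u + (b - a)))
    with (wp_comp h x xi (u + 1) - wp_comp h x xi u) in H4 by ring.
  nra.
Qed.

Lemma wp_comp_continuous h x xi u0 : small_hbar h ->
  (forall k u, continuity_pt (fun v => p (wp_term h x xi v k)) u) ->
  continuity_pt (wp_comp h x xi) u0.
Proof.
  intros Hs Hc. destruct (INR_unbounded (Rabs (u0 - x) + 1)) as [V HV].
  apply (CVU_continuity (fun n u => symsum (fun k => p (wp_term h x xi u k)) n) _ u0
    (mkposreal 1 Rlt_0_1)).
  - intros eps Heps.
    destruct (half_pow_lt_eps (2 * 2 ^ V) eps ltac:(pose proof (pow_lt 2 V); lra) Heps) as [N HN].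
    exists N. intros n u Hn Hu. unfold Boule in Hu; simpl in Hu.
    eapply Rle_lt_trans; [apply wp_comp_approx; auto | apply HN; auto].
    replace (u - x) with ((u - u0) + (u0 - x)) by ring.
    pose proof (Rabs_triang (u - u0) (u0 - x)). lra.
  - intros n u _. unfold symsum. generalize (2 * n)%nat. intros m.
    induction m; simpl; [apply Hc | apply continuity_pt_plus; auto].
  - unfold Boule; simpl. rewrite Rminus_diag, Rabs_R0. lra.
Qed.

Lemma wp_comp_sub_center h yy ee z : 0 < h -> exp (- (1/16) / h) <= 1/2 -> Rabs (z - yy) <= 3/4 ->
  Rabs (wp_comp h yy ee z - p (wp_term h yy ee z 0)) <= 4 * exp (- (1/64) / h).
Proof.
  intros Hh Hq Hz. apply symsum_lim_sub_center. intros i Hi.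
  destruct (gauss_center_tail h yy z i Hh Hq Hi Hz).
  pose proof (p_wp_term_bound h yy ee z (INR i)). pose proof (p_wp_term_bound h yy ee z (- INR i)).
  lra.
Qed.

Lemma wp_comp_bounded h x xi u : small_hbar h -> Rabs (u - x) <= 3 -> Rabs (wp_comp h x xi u) <= 17.
Proof.
  intros Hs Hu. pose proof (wp_comp_approx h x xi u 3 0 Hs ltac:(simpl; lra)) as H.
  rewrite symsum_0 in H. simpl in H.
  pose proof (p_wp_term_bound h x xi u 0). pose proof (gauss_le1 h x u 0 (proj1 Hs)).
  pose proof (Rabs_triang_inv (wp_comp h x xi u) (p (wp_term h x xi u 0))). lra.
Qed.

Lemma wp_comp_sub_center_weighted h x xi u w K : 0 < w ->
  (forall i : nat, (1 <= i)%nat -> w * (gauss h x u (INR i) + gauss h x u (- INR i)) <= K * (1/2)^i) ->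
  w * Rabs (wp_comp h x xi u - p (wp_term h x xi u 0)) <= K.
Proof.
  intros Hw H.
  assert (Rabs (wp_comp h x xi u - p (wp_term h x xi u 0)) <= K / w).
  { apply symsum_lim_sub_center. intros i Hi. specialize (H i Hi).
    pose proof (p_wp_term_bound h x xi u (INR i)). pose proof (p_wp_term_bound h x xi u (- INR i)).
    apply Rmult_le_reg_l with w; auto.
    replace (w * (K / w * (1/2)^i)) with (K * (1/2)^i) by (field; lra). nra. }
  apply Rmult_le_compat_l with (r := w) in H0; [|lra].
  replace (w * (K / w)) with K in H0 by (field; lra). auto.
Qed.

End WavepacketComponent.

Lemma wavepacket_eq h x xi u : wavepacket h x xi u = (wp_comp fst h x xi u, wp_comp snd h x xi u).
Proof. reflexivity. Qed.

Lemma wavepacket_periodic h x xi u : small_hbar h -> wavepacket h x xi (u + 1) = wavepacket h x xi u.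
Proof.
  intros Hs. rewrite !wavepacket_eq.
  rewrite (wp_comp_periodic fst wp_term_fst_bound), (wp_comp_periodic snd wp_term_snd_bound); auto.
Qed.

Lemma wavepacket_shift_nat h x xi u (n : nat) : small_hbar h ->
  wavepacket h x xi (u + INR n) = wavepacket h x xi u.
Proof.
  intros Hs. induction n. simpl. rewrite Rplus_0_r. auto.
  rewrite S_INR. replace (u + (INR n + 1)) with ((u + INR n) + 1) by ring.
  rewrite wavepacket_periodic; auto.
Qed.

Lemma wavepacket_shift_Z h x xi u (m : Z) : small_hbar h ->
  wavepacket h x xi (u + IZR m) = wavepacket h x xi u.
Proof.
  intros Hs. destruct (Z_le_gt_dec 0 m) as [Hm|Hm].
  - replace m with (Z.of_nat (Z.to_nat m)) by (apply Z2Nat.id; lia).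
    rewrite <- INR_IZR_INZ. apply wavepacket_shift_nat; auto.
  - replace m with (- Z.of_nat (Z.to_nat (- m)))%Z by (rewrite Z2Nat.id; lia).
    rewrite opp_IZR, <- INR_IZR_INZ.
    rewrite <- (wavepacket_shift_nat h x xi (u + - INR (Z.to_nat (- m))) (Z.to_nat (- m))); auto.
    f_equal. ring.
Qed.

Lemma wavepacket_doubling h x xi z : small_hbar h ->
  wavepacket h x xi (doubling z) = wavepacket h x xi (2 * z).
Proof.
  intros Hs. unfold doubling, frac_part, Rminus. rewrite <- opp_IZR. apply wavepacket_shift_Z; auto.
Qed.

Lemma wavepacket_continuous h x xi u : small_hbar h ->
  continuity_pt (fun v => fst (wavepacket h x xi v)) u /\
  continuity_pt (fun v => snd (wavepacket h x xi v)) u.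
Proof.
  intros Hs. split.
  - apply (wp_comp_continuous fst wp_term_fst_bound); auto.
    intros k v. unfold wp_term; simpl. continuity_pt_auto.
  - apply (wp_comp_continuous snd wp_term_snd_bound); auto.
    intros k v. unfold wp_term; simpl. continuity_pt_auto.
Qed.

Lemma wavepacket_sub_center h yy ee z : 0 < h -> exp (- (1/16) / h) <= 1/2 -> Rabs (z - yy) <= 3/4 ->
  cnorm1 (csub (wavepacket h yy ee z) (wp_term h yy ee z 0)) <= 8 * exp (- (1/64) / h).
Proof.
  intros Hh Hq Hz. rewrite wavepacket_eq. unfold cnorm1, csub; cbn [fst snd].
  pose proof (wp_comp_sub_center fst wp_term_fst_bound h yy ee z Hh Hq Hz).
  pose proof (wp_comp_sub_center snd wp_term_snd_bound h yy ee z Hh Hq Hz).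
  lra.
Qed.

Lemma cnorm1_wavepacket_le h x xi u : small_hbar h -> Rabs (u - x) <= 3 ->
  cnorm1 (wavepacket h x xi u) <= 34.
Proof.
  intros Hs Hu. rewrite wavepacket_eq. unfold cnorm1; cbn [fst snd].
  pose proof (wp_comp_bounded fst wp_term_fst_bound h x xi u Hs Hu).
  pose proof (wp_comp_bounded snd wp_term_snd_bound h x xi u Hs Hu).
  lra.
Qed.

Lemma wavepacket_sub_center_weighted h x xi u w K : 0 < w ->
  (forall i : nat, (1 <= i)%nat -> w * (gauss h x u (INR i) + gauss h x u (- INR i)) <= K * (1/2)^i) ->
  w * cnorm1 (csub (wavepacket h x xi u) (wp_term h x xi u 0)) <= 2 * K.
Proof.
  intros Hw H. rewrite wavepacket_eq. unfold cnorm1, csub; cbn [fst snd].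
  pose proof (wp_comp_sub_center_weighted fst wp_term_fst_bound h x xi u w K Hw H).
  pose proof (wp_comp_sub_center_weighted snd wp_term_snd_bound h x xi u w K Hw H).
  lra.
Qed.

Lemma derivable_pt_lim_val f x l l' : derivable_pt_lim f x l -> l = l' -> derivable_pt_lim f x l'.
Proof. intros H e; subst; auto. Qed.

Lemma derivable_pt_lim_fconst c x : derivable_pt_lim (fun _ => c) x 0.
Proof. apply derivable_pt_lim_const. Qed.

Lemma derivable_pt_lim_fid x : derivable_pt_lim (fun z => z) x 1.
Proof. apply derivable_pt_lim_id. Qed.

Lemma derivable_pt_lim_exp_comp f x a : derivable_pt_lim f x a ->
  derivable_pt_lim (fun z => exp (f z)) x (exp (f x) * a).
Proof. intros H. apply (derivable_pt_lim_comp f exp); auto. apply derivable_pt_lim_exp. Qed.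

Lemma derivable_pt_lim_cos_comp f x a : derivable_pt_lim f x a ->
  derivable_pt_lim (fun z => cos (f z)) x (- sin (f x) * a).
Proof. intros H. apply (derivable_pt_lim_comp f cos); auto. apply derivable_pt_lim_cos. Qed.

Lemma derivable_pt_lim_sin_comp f x a : derivable_pt_lim f x a ->
  derivable_pt_lim (fun z => sin (f z)) x (cos (f x) * a).
Proof. intros H. apply (derivable_pt_lim_comp f sin); auto. apply derivable_pt_lim_sin. Qed.

Lemma derivable_pt_lim_pow2 f x a : derivable_pt_lim f x a ->
  derivable_pt_lim (fun z => f z ^ 2) x (2 * f x * a).
Proof.
  intros H. apply (derivable_pt_lim_comp f (fun t => t ^ 2)); auto.
  replace (2 * f x) with (INR 2 * f x ^ (2 - 1)) by (simpl; ring). apply derivable_pt_lim_pow.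
Qed.

Ltac derivable_pt_lim_auto := repeat first
  [ apply derivable_pt_lim_plus | apply derivable_pt_lim_minus | apply derivable_pt_lim_mult
  | apply derivable_pt_lim_opp | apply derivable_pt_lim_exp_comp | apply derivable_pt_lim_cos_comp
  | apply derivable_pt_lim_sin_comp | apply derivable_pt_lim_pow2 | apply derivable_pt_lim_fid
  | apply derivable_pt_lim_fconst | eassumption ].

Definition cderivable_lim (f : R -> Cx) (z : R) (l : Cx) : Prop :=
  derivable_pt_lim (fun t => fst (f t)) z (fst l) /\ derivable_pt_lim (fun t => snd (f t)) z (snd l).

Lemma cderivable_lim_val f z l l' : cderivable_lim f z l -> l = l' -> cderivable_lim f z l'.
Proof. intros H e; subst; auto. Qed.

Lemma cderivable_lim_continuous f z l : cderivable_lim f z l ->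
  continuity_pt (fun t => fst (f t)) z /\ continuity_pt (fun t => snd (f t)) z.
Proof. intros [H1 H2]. split; apply derivable_continuous_pt; eexists; eauto. Qed.

Lemma cderivable_lim_const c z : cderivable_lim (fun _ => c) z (0, 0).
Proof. split; apply derivable_pt_lim_fconst. Qed.

Lemma cderivable_lim_add f g a b z : cderivable_lim f z a -> cderivable_lim g z b ->
  cderivable_lim (fun t => cadd (f t) (g t)) z (cadd a b).
Proof. intros [H1 H2] [H3 H4]. split; apply derivable_pt_lim_plus; auto. Qed.

Lemma cderivable_lim_mul f g a b z : cderivable_lim f z a -> cderivable_lim g z b ->
  cderivable_lim (fun t => cmul (f t) (g t)) z (cadd (cmul a (g z)) (cmul (f z) b)).
Proof.
  intros [H1 H2] [H3 H4]. unfold cmul, cadd. split; cbn [fst snd];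
    (eapply derivable_pt_lim_val; [derivable_pt_lim_auto | cbv beta; ring]).
Qed.

Lemma cderivable_lim_inv p q p' q' z : derivable_pt_lim p z p' -> derivable_pt_lim q z q' ->
  p z ^ 2 + q z ^ 2 <> 0 ->
  cderivable_lim (fun t => cinv (p t, q t)) z
    (cmul (-1, 0) (cmul (p', q') (cmul (cinv (p z, q z)) (cinv (p z, q z))))).
Proof.
  intros Hp Hq Hn. unfold cinv. split; cbn [fst snd].
  - eapply derivable_pt_lim_val. apply derivable_pt_lim_div; [exact Hp| |exact Hn].
    apply derivable_pt_lim_plus; apply derivable_pt_lim_pow2; eauto.
    unfold cmul, Rsqr; cbn [fst snd]. field. auto.
  - eapply derivable_pt_lim_val. apply derivable_pt_lim_div; [apply derivable_pt_lim_opp; exact Hq| |exact Hn].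
    apply derivable_pt_lim_plus; apply derivable_pt_lim_pow2; eauto.
    unfold cmul, Rsqr; cbn [fst snd]. field. auto.
Qed.

(* Expressions in the derivatives [ADer n] = tau^(n) and in [AInv] = 1/Phi', where the phase
   Phi(z) = -((z - y')^2 + (2z - c)^2)/4 + i(-eta' z + xi (2z - J) + tau z) has
   Phi'' = -5/2 + i tau''; [aderiv] is the symbolic derivative, using (1/Phi')' = -Phi'' (1/Phi')^2. *)
Inductive aexpr : Type :=
| AConst (c : Cx) | ADer (n : nat) | AInv | AAdd (a b : aexpr) | AMul (a b : aexpr).

Fixpoint aeval (D : nat -> R -> R) (w : R -> Cx) (e : aexpr) (z : R) : Cx :=
  match e with
  | AConst c => c
  | ADer n => (D n z, 0)
  | AInv => w z
  | AAdd a b => cadd (aeval D w a z) (aeval D w b z)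
  | AMul a b => cmul (aeval D w a z) (aeval D w b z)
  end.

Fixpoint aderiv (e : aexpr) : aexpr :=
  match e with
  | AConst _ => AConst (0, 0)
  | ADer n => ADer (S n)
  | AInv => AMul (AConst (-1, 0))
              (AMul (AAdd (AConst (-5/2, 0)) (AMul (AConst (0, 1)) (ADer 2))) (AMul AInv AInv))
  | AAdd a b => AAdd (aderiv a) (aderiv b)
  | AMul a b => AAdd (AMul (aderiv a) b) (AMul a (aderiv b))
  end.

Fixpoint abound (M : nat -> R) (cw : R) (e : aexpr) : R :=
  match e with
  | AConst c => cnorm1 c
  | ADer n => M n
  | AInv => cw
  | AAdd a b => abound M cw a + abound M cw b
  | AMul a b => abound M cw a * abound M cw b
  end.

Lemma cnorm1_aeval_le D w M cw z e : (forall n, Rabs (D n z) <= M n) -> cnorm1 (w z) <= cw ->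
  cnorm1 (aeval D w e z) <= abound M cw e.
Proof.
  intros HM Hw. induction e; simpl.
  - lra.
  - unfold cnorm1; simpl. rewrite Rabs_R0. specialize (HM n). lra.
  - auto.
  - eapply Rle_trans. apply cnorm1_cadd. lra.
  - eapply Rle_trans. apply cnorm1_cmul. apply Rmult_le_compat; auto; apply cnorm1_ge0.
Qed.

Lemma abound_ge0 M cw e : (forall n, 0 <= M n) -> 0 <= cw -> 0 <= abound M cw e.
Proof.
  intros H1 H2. induction e; simpl; auto.
  apply cnorm1_ge0. lra. apply Rmult_le_pos; auto.
Qed.

Lemma aeval_cderivable D w z e : (forall n t, derivable_pt_lim (D n) t (D (S n) t)) ->
  cderivable_lim w z (aeval D w (aderiv AInv) z) ->
  cderivable_lim (aeval D w e) z (aeval D w (aderiv e) z).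
Proof.
  intros HD Hw. induction e.
  - apply cderivable_lim_const.
  - split; simpl. apply HD. apply derivable_pt_lim_fconst.
  - exact Hw.
  - apply cderivable_lim_add; auto.
  - simpl. apply cderivable_lim_mul; auto.
Qed.

Fixpoint ibp_amp (k : nat) : aexpr :=
  match k with
  | O => AConst (1, 0)
  | S k => AMul (AConst (-1, 0)) (aderiv (AMul (ibp_amp k) AInv))
  end.

(** * Integration by parts against a non-stationary phase *)

Lemma ex_RInt_continuous_on (f : R -> R) a b : a <= b ->
  (forall z, a <= z <= b -> continuity_pt f z) -> ex_RInt f a b.
Proof.
  intros Hab Hc. apply (@ex_RInt_continuous R_CompleteNormedModule). intros z Hz.
  rewrite Rmin_left, Rmax_right in Hz by auto. apply continuity_pt_filterlim. auto.
Qed.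

Lemma RInt_derivable_pt_lim (F f : R -> R) a b : a <= b ->
  (forall z, a <= z <= b -> derivable_pt_lim F z (f z)) ->
  (forall z, a <= z <= b -> continuity_pt f z) ->
  RInt f a b = F b - F a.
Proof.
  intros Hab Hd Hc. apply is_RInt_unique, (is_RInt_derive F f a b).
  - intros z Hz. rewrite Rmin_left, Rmax_right in Hz by auto. apply is_derive_Reals. auto.
  - intros z Hz. rewrite Rmin_left, Rmax_right in Hz by auto. apply continuity_pt_filterlim. auto.
Qed.

Lemma RInt_scal_minus (f g : R -> R) a b c : ex_RInt f a b -> ex_RInt g a b ->
  RInt (fun z => c * f z - g z) a b = c * RInt f a b - RInt g a b.
Proof.
  intros Hf Hg. apply is_RInt_unique.
  pose proof (RInt_correct f a b Hf) as H1. pose proof (RInt_correct g a b Hg) as H2.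
  apply (is_RInt_minus (fun z => c * f z) g a b (c * RInt f a b) (RInt g a b)); auto.
  apply (is_RInt_scal f a b c (RInt f a b)); auto.
Qed.

Lemma RInt_by_parts_scaled (G P Q : R -> R) h A B : 0 < h -> A <= B ->
  (forall z, A <= z <= B -> derivable_pt_lim G z (1/h * P z - Q z)) ->
  (forall z, A <= z <= B -> continuity_pt P z) -> (forall z, A <= z <= B -> continuity_pt Q z) ->
  RInt P A B = h * (G B - G A) + h * RInt Q A B.
Proof.
  intros Hh HAB HG HP HQ.
  rewrite <- (RInt_derivable_pt_lim G _ A B HAB HG).
  - rewrite RInt_scal_minus by (apply ex_RInt_continuous_on; auto).
    assert (Halg : forall I J : R, I = h * (1 / h * I - J) + h * J) by (intros; field; lra).
    apply Halg.
  - intros z Hz. apply continuity_pt_minus; auto.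
    apply continuity_pt_mult; auto. apply continuity_pt_fconst.
Qed.

Definition re_phase (yy c z : R) : R := - ((z - yy)^2 + (2*z - c)^2) / 4.
Definition re_phase' (yy c z : R) : R := - (z - yy)/2 - (2*z - c).
Definition im_phase (D : nat -> R -> R) (ee xi J z : R) : R := - ee * z + xi * (2*z - J) + D 0%nat z.
Definition im_phase' (D : nat -> R -> R) (ee xi z : R) : R := - ee + 2 * xi + D 1%nat z.

Definition model_integrand h yy c D ee xi J (z : R) : Cx :=
  (exp (re_phase yy c z / h) * cos (im_phase D ee xi J z / h),
   exp (re_phase yy c z / h) * sin (im_phase D ee xi J z / h)).

Definition inv_phase' yy c D ee xi (z : R) : Cx := cinv (re_phase' yy c z, im_phase' D ee xi z).

Lemma cnorm1_model_integrand h yy c D ee xi J z :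
  cnorm1 (model_integrand h yy c D ee xi J z) <= 2 * exp (re_phase yy c z / h).
Proof.
  unfold model_integrand, cnorm1; cbn [fst snd].
  destruct (Rabs_mult_trig_le (exp (re_phase yy c z / h)) (im_phase D ee xi J z / h) (exp_pos _)).
  lra.
Qed.

Lemma model_integrand_cderivable h yy c D ee xi J z : 0 < h ->
  (forall n t, derivable_pt_lim (D n) t (D (S n) t)) ->
  cderivable_lim (model_integrand h yy c D ee xi J) z
    (cmul (re_phase' yy c z / h, im_phase' D ee xi z / h) (model_integrand h yy c D ee xi J z)).
Proof.
  intros Hh HD. unfold model_integrand, re_phase, re_phase', im_phase, im_phase'.
  split; cbn [fst snd]; (eapply derivable_pt_lim_val;
    [derivable_pt_lim_auto; apply HD | unfold cmul; cbn [fst snd]; field; lra]).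
Qed.

Lemma inv_phase'_cderivable yy c D ee xi z :
  (forall n t, derivable_pt_lim (D n) t (D (S n) t)) ->
  re_phase' yy c z ^ 2 + im_phase' D ee xi z ^ 2 <> 0 ->
  cderivable_lim (inv_phase' yy c D ee xi) z (aeval D (inv_phase' yy c D ee xi) (aderiv AInv) z).
Proof.
  intros HD Hn. unfold inv_phase'.
  eapply cderivable_lim_val.
  - apply (cderivable_lim_inv (re_phase' yy c) (im_phase' D ee xi) (-5/2) (D 2%nat z)); auto.
    + unfold re_phase'. eapply derivable_pt_lim_val; [derivable_pt_lim_auto | cbv beta; field].
    + unfold im_phase'. eapply derivable_pt_lim_val; [derivable_pt_lim_auto; apply HD | cbv beta; ring].
  - simpl. f_equal. f_equal. unfold cadd, cmul; simpl. f_equal; ring.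
Qed.

(* The product rule for (a w) e^{Phi/h}, rewritten with w Phi' = 1. *)
Lemma ibp_deriv_identity X E a w s h : cmul w s = (1, 0) -> h <> 0 ->
  cadd (cmul X E) (cmul (cmul a w) (cmul (fst s / h, snd s / h) E)) =
  ((1/h) * fst (cmul a E) - fst (cmul (cmul (-1, 0) X) E),
   (1/h) * snd (cmul a E) - snd (cmul (cmul (-1, 0) X) E)).
Proof.
  intros Hws Hh.
  assert (E1 : cmul (cmul a w) (cmul (fst s / h, snd s / h) E) =
               cmul (1/h, 0) (cmul a (cmul (cmul w s) E))).
  { destruct a, w, s, E; unfold cmul; simpl; f_equal; field; auto. }
  rewrite E1, Hws, cmul_1l.
  destruct X, E, a; unfold cmul, cadd; simpl; f_equal; field; auto.
Qed.

Section NonstationaryPhase.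

Variables (h yy c : R) (D : nat -> R -> R) (ee xi J A B : R).
Hypothesis Hh : 0 < h.
Hypothesis Hh1 : h <= 1.
Hypothesis HAB : A <= B.
Hypothesis HD : forall n t, derivable_pt_lim (D n) t (D (S n) t).
Hypothesis Hnz : forall z, A <= z <= B -> re_phase' yy c z ^ 2 + im_phase' D ee xi z ^ 2 <> 0.

Let w := inv_phase' yy c D ee xi.
Let E := model_integrand h yy c D ee xi J.

Definition ibp_integrand (k : nat) (z : R) : Cx := cmul (aeval D w (ibp_amp k) z) (E z).
Definition ibp_boundary (k : nat) (z : R) : Cx := cmul (aeval D w (AMul (ibp_amp k) AInv) z) (E z).

Lemma aeval_inv_phase'_cderivable e z : A <= z <= B ->
  cderivable_lim (aeval D w e) z (aeval D w (aderiv e) z).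
Proof. intros Hz. apply aeval_cderivable; auto. apply inv_phase'_cderivable; auto. Qed.

Lemma ibp_integrand_continuous k z : A <= z <= B ->
  continuity_pt (fun t => fst (ibp_integrand k t)) z /\ continuity_pt (fun t => snd (ibp_integrand k t)) z.
Proof.
  intros Hz. eapply cderivable_lim_continuous. unfold ibp_integrand. apply cderivable_lim_mul.
  apply aeval_inv_phase'_cderivable; auto. apply model_integrand_cderivable; auto.
Qed.

Lemma ibp_boundary_cderivable k z : A <= z <= B ->
  cderivable_lim (ibp_boundary k) z
    ((1/h) * fst (ibp_integrand k z) - fst (ibp_integrand (S k) z),
     (1/h) * snd (ibp_integrand k z) - snd (ibp_integrand (S k) z)).
Proof.
  intros Hz. unfold ibp_boundary. eapply cderivable_lim_val. apply cderivable_lim_mul.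
  - apply aeval_inv_phase'_cderivable; auto.
  - apply model_integrand_cderivable; auto.
  - unfold ibp_integrand. simpl aeval at 2 4. fold E.
    apply (ibp_deriv_identity _ _ _ _ (re_phase' yy c z, im_phase' D ee xi z) h); [|lra].
    unfold w, inv_phase'. apply cinv_mul. apply Hnz; auto.
Qed.

Lemma ibp_step k :
  RInt (fun z => fst (ibp_integrand k z)) A B =
    h * (fst (ibp_boundary k B) - fst (ibp_boundary k A)) + h * RInt (fun z => fst (ibp_integrand (S k) z)) A B /\
  RInt (fun z => snd (ibp_integrand k z)) A B =
    h * (snd (ibp_boundary k B) - snd (ibp_boundary k A)) + h * RInt (fun z => snd (ibp_integrand (S k) z)) A B.
Proof.
  split; [apply (RInt_by_parts_scaled (fun z => fst (ibp_boundary k z)))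
         | apply (RInt_by_parts_scaled (fun z => snd (ibp_boundary k z)))]; auto;
    intros z Hz; apply ibp_boundary_cderivable || apply ibp_integrand_continuous; auto.
Qed.

Variables (M : nat -> R) (cw a : R).
Hypothesis HM : forall n z, A <= z <= B -> Rabs (D n z) <= M n.
Hypothesis HM0 : forall n, 0 <= M n.
Hypothesis Hw : forall z, A <= z <= B -> cnorm1 (w z) <= cw.
Hypothesis Hcw : 0 <= cw.
Hypothesis Hre : forall z, A <= z <= B -> re_phase yy c z <= 0.
Hypothesis HreA : re_phase yy c A <= - a.
Hypothesis HreB : re_phase yy c B <= - a.

Lemma exp_re_phase_le1 z : A <= z <= B -> exp (re_phase yy c z / h) <= 1.
Proof.
  intros Hz. rewrite <- exp_0.
  replace (re_phase yy c z / h) with (- (- re_phase yy c z) / h) by (field; lra).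
  replace 0 with (- 0 / h) by (field; lra).
  apply exp_neg_div_le; auto. pose proof (Hre z Hz). lra.
Qed.

Lemma exp_re_phase_endpoint z : re_phase yy c z <= - a -> exp (re_phase yy c z / h) <= exp (- a / h).
Proof.
  intros H. replace (re_phase yy c z / h) with (- (- re_phase yy c z) / h) by (field; lra).
  apply exp_neg_div_le; auto. lra.
Qed.

Definition amp_bound (k : nat) : R := abound M cw (ibp_amp k).

Lemma cnorm1_ibp_integrand k z : A <= z <= B ->
  cnorm1 (ibp_integrand k z) <= amp_bound k * (2 * exp (re_phase yy c z / h)).
Proof.
  intros Hz. unfold ibp_integrand. eapply Rle_trans. apply cnorm1_cmul.
  apply Rmult_le_compat; try apply cnorm1_ge0.
  - apply cnorm1_aeval_le. intros; apply HM; auto. apply Hw; auto.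
  - apply (cnorm1_model_integrand h yy c D ee xi J).
Qed.

Lemma cnorm1_ibp_boundary k z : A <= z <= B ->
  cnorm1 (ibp_boundary k z) <= amp_bound k * cw * (2 * exp (re_phase yy c z / h)).
Proof.
  intros Hz. unfold ibp_boundary. eapply Rle_trans. apply cnorm1_cmul.
  apply Rmult_le_compat; try apply cnorm1_ge0.
  - apply (cnorm1_aeval_le D w M cw z (AMul (ibp_amp k) AInv)). intros; apply HM; auto. apply Hw; auto.
  - apply (cnorm1_model_integrand h yy c D ee xi J).
Qed.

Definition ibp_mass (k : nat) : R :=
  Rabs (RInt (fun z => fst (ibp_integrand k z)) A B) + Rabs (RInt (fun z => snd (ibp_integrand k z)) A B).

Lemma ibp_mass_le k : ibp_mass k <= 4 * (B - A) * amp_bound k.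
Proof.
  assert (Hb : forall z, A <= z <= B -> cnorm1 (ibp_integrand k z) <= 2 * amp_bound k).
  { intros z Hz. eapply Rle_trans. apply cnorm1_ibp_integrand; auto.
    pose proof (exp_re_phase_le1 z Hz). pose proof (abound_ge0 M cw (ibp_amp k) HM0 Hcw).
    unfold amp_bound in *. nra. }
  unfold ibp_mass.
  assert (Rabs (RInt (fun z => fst (ibp_integrand k z)) A B) <= (B - A) * (2 * amp_bound k)).
  { apply abs_RInt_le_const; auto.
    - apply ex_RInt_continuous_on; auto. intros; apply ibp_integrand_continuous; auto.
    - intros t Ht. pose proof (Hb t Ht). unfold cnorm1 in *. pose proof (Rabs_pos (snd (ibp_integrand k t))). lra. }
  assert (Rabs (RInt (fun z => snd (ibp_integrand k z)) A B) <= (B - A) * (2 * amp_bound k)).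
  { apply abs_RInt_le_const; auto.
    - apply ex_RInt_continuous_on; auto. intros; apply ibp_integrand_continuous; auto.
    - intros t Ht. pose proof (Hb t Ht). unfold cnorm1 in *. pose proof (Rabs_pos (fst (ibp_integrand k t))). lra. }
  lra.
Qed.

Lemma ibp_mass_step k :
  ibp_mass k <= 4 * h * amp_bound k * cw * exp (- a / h) + h * ibp_mass (S k).
Proof.
  unfold ibp_mass. destruct (ibp_step k) as [E1 E2]. rewrite E1, E2.
  pose proof (abound_ge0 M cw (ibp_amp k) HM0 Hcw). fold (amp_bound k) in H.
  assert (Hbc : 0 <= amp_bound k * cw) by (apply Rmult_le_pos; auto).
  assert (HG : forall z, A <= z <= B -> re_phase yy c z <= - a ->
            cnorm1 (ibp_boundary k z) <= amp_bound k * cw * (2 * exp (- a / h))).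
  { intros z Hz Hz'. eapply Rle_trans. apply cnorm1_ibp_boundary; auto.
    pose proof (exp_re_phase_endpoint z Hz'). nra. }
  pose proof (HG B (conj HAB (Rle_refl B)) HreB) as HGB.
  pose proof (HG A (conj (Rle_refl A) HAB) HreA) as HGA.
  unfold cnorm1 in HGB, HGA.
  set (gB1 := fst (ibp_boundary k B)) in *. set (gA1 := fst (ibp_boundary k A)) in *.
  set (gB2 := snd (ibp_boundary k B)) in *. set (gA2 := snd (ibp_boundary k A)) in *.
  set (I1 := RInt (fun z => fst (ibp_integrand (S k) z)) A B).
  set (I2 := RInt (fun z => snd (ibp_integrand (S k) z)) A B).
  assert (T : forall u v, Rabs (h * u + h * v) <= h * Rabs u + h * Rabs v).
  { intros u v. eapply Rle_trans. apply Rabs_triang. rewrite !Rabs_mult, Rabs_pos_eq by lra. lra. }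
  pose proof (T (gB1 - gA1) I1). pose proof (T (gB2 - gA2) I2).
  pose proof (Rabs_triang gB1 (- gA1)). pose proof (Rabs_triang gB2 (- gA2)).
  rewrite Rabs_Ropp in *. unfold Rminus in *.
  assert (h * Rabs (gB1 + - gA1) <= h * (Rabs gB1 + Rabs gA1)) by (apply Rmult_le_compat_l; lra).
  assert (h * Rabs (gB2 + - gA2) <= h * (Rabs gB2 + Rabs gA2)) by (apply Rmult_le_compat_l; lra).
  nra.
Qed.

Fixpoint ibp_boundary_sum (N : nat) : R :=
  match N with O => 0 | S n => ibp_boundary_sum n + 4 * amp_bound n * cw end.

Lemma ibp_boundary_sum_ge0 N : 0 <= ibp_boundary_sum N.
Proof.
  induction N; simpl. lra. pose proof (abound_ge0 M cw (ibp_amp N) HM0 Hcw).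
  assert (0 <= amp_bound N * cw) by (apply Rmult_le_pos; auto). lra.
Qed.

Lemma ibp_mass_iter N : ibp_mass 0 <= ibp_boundary_sum N * exp (- a / h) + h ^ N * ibp_mass N.
Proof.
  induction N.
  - simpl. lra.
  - simpl ibp_boundary_sum. pose proof (ibp_mass_step N) as HS.
    assert (Hp : 0 <= h ^ N) by (apply pow_le; lra).
    assert (Hp1 : h ^ N * h <= 1).
    { assert (h ^ N <= 1) by (rewrite <- (pow1 N); apply pow_incr; lra). nra. }
    assert (HX : 0 <= 4 * amp_bound N * cw * exp (- a / h)).
    { pose proof (abound_ge0 M cw (ibp_amp N) HM0 Hcw). pose proof (exp_pos (- a / h)).
      unfold amp_bound. apply Rmult_le_pos; [|lra]. apply Rmult_le_pos; auto. lra. }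
    set (X := 4 * amp_bound N * cw * exp (- a / h)) in *.
    assert (h ^ N * ibp_mass N <= h ^ N * (h * X) + h ^ N * (h * ibp_mass (S N))).
    { replace (4 * h * amp_bound N * cw * exp (- a / h)) with (h * X) in HS by (unfold X; ring).
      rewrite <- Rmult_plus_distr_l. apply Rmult_le_compat_l; auto. }
    replace ((ibp_boundary_sum N + 4 * amp_bound N * cw) * exp (- a / h))
      with (ibp_boundary_sum N * exp (- a / h) + X) by (unfold X; ring).
    simpl pow. nra.
Qed.

(* Re Phi <= -a at both endpoints makes the boundary terms O(e^{-a/h}). *)
Lemma nonstationary_phase N : 0 < a ->
  Rabs (RInt (fun z => fst (E z)) A B) + Rabs (RInt (fun z => snd (E z)) A B) <=
  (ibp_boundary_sum N * (INR N / a) ^ N + 4 * (B - A) * amp_bound N) * h ^ N.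
Proof.
  intros Ha.
  assert (Ef : forall p : Cx -> R, RInt (fun z => p (E z)) A B = RInt (fun z => p (ibp_integrand 0 z)) A B).
  { intros p. apply RInt_ext. intros t _. unfold ibp_integrand. simpl aeval. rewrite cmul_1l. auto. }
  rewrite (Ef fst), (Ef snd). fold (ibp_mass 0).
  pose proof (ibp_mass_iter N). pose proof (ibp_mass_le N).
  pose proof (exp_neg_div_le_pow a h N Ha Hh). pose proof (ibp_boundary_sum_ge0 N).
  assert (Hp : 0 <= h ^ N) by (apply pow_le; lra).
  assert (ibp_boundary_sum N * exp (- a / h) <= ibp_boundary_sum N * ((INR N / a) ^ N * h ^ N))
    by (apply Rmult_le_compat_l; auto).
  assert (h ^ N * ibp_mass N <= h ^ N * (4 * (B - A) * amp_bound N)) by (apply Rmult_le_compat_l; auto).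
  nra.
Qed.

End NonstationaryPhase.

(** * Reduction to an integral over one period *)

Lemma ex_RInt_continuous_everywhere (f : R -> R) a b : (forall z, continuity_pt f z) -> ex_RInt f a b.
Proof.
  intros Hc. destruct (Rle_dec a b) as [H|H].
  - apply ex_RInt_continuous_on; auto.
  - apply ex_RInt_swap. apply ex_RInt_continuous_on; auto. lra.
Qed.

Lemma RInt_periodic_shift (f : R -> R) a : (forall z, continuity_pt f z) -> (forall z, f (z + 1) = f z) ->
  RInt f 0 1 = RInt f a (a + 1).
Proof.
  intros Hc Hp.
  assert (H1 := RInt_comp_lin f 1 1 0 a (ex_RInt_continuous_everywhere f _ _ Hc)).
  replace (1 * 0 + 1) with 1 in H1 by ring. replace (1 * a + 1) with (a + 1) in H1 by ring.
  assert (H2 : RInt (fun y => scal 1 (f (1 * y + 1))) 0 a = RInt f 0 a).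
  { apply RInt_ext. intros t _. change (scal 1 (f (1 * t + 1))) with (1 * f (1 * t + 1)).
    rewrite Rmult_1_l. replace (1 * t + 1) with (t + 1) by ring. auto. }
  assert (H3 : RInt f 1 (a + 1) = RInt f 0 a) by (rewrite <- H2; symmetry; exact H1).
  rewrite <- (RInt_Chasles f a 1 (a+1)) by (apply ex_RInt_continuous_everywhere; auto).
  rewrite <- (RInt_Chasles f 0 a 1) by (apply ex_RInt_continuous_everywhere; auto).
  rewrite H3. unfold plus; simpl. change (@AbelianMonoid.plus R_AbelianMonoid) with Rplus. ring.
Qed.

Lemma Rabs_RInt_periodic_le (f g : R -> R) A eps :
  (forall z, continuity_pt f z) -> (forall z, f (z + 1) = f z) ->
  (forall z, A <= z <= A + 1 -> continuity_pt g z) ->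
  (forall z, A <= z <= A + 1 -> Rabs (f z - g z) <= eps) ->
  Rabs (RInt f 0 1) <= Rabs (RInt g A (A + 1)) + eps.
Proof.
  intros Hf Hp Hg Hfg.
  rewrite (RInt_periodic_shift _ A Hf Hp).
  assert (E : RInt (fun z => 1 * f z - g z) A (A + 1) = 1 * RInt f A (A + 1) - RInt g A (A + 1)).
  { apply RInt_scal_minus; apply ex_RInt_continuous_on; auto; lra. }
  assert (Hd : Rabs (RInt (fun z => 1 * f z - g z) A (A + 1)) <= (A + 1 - A) * eps).
  { apply abs_RInt_le_const; [lra | |].
    - apply ex_RInt_continuous_on; [lra|]. intros z Hz.
      apply continuity_pt_minus; auto. apply continuity_pt_mult; auto. apply continuity_pt_fconst.
    - intros t Ht. rewrite Rmult_1_l. apply Hfg; auto. }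
  rewrite E in Hd. replace (A + 1 - A) with 1 in Hd by ring.
  pose proof (Rabs_triang_inv (RInt f A (A + 1)) (RInt g A (A + 1))). rewrite Rmult_1_l in Hd. lra.
Qed.

(* The integrand of <phi_{yy,ee}, F phi_{x,xi}>, with the doubling map unfolded as z |-> 2z - J. *)
Definition pairing_integrand h x xi yy ee (tau : R -> R) J (z : R) : Cx :=
  cmul (cconj (wavepacket h yy ee z)) (cmul (wavepacket h x xi (2 * z - J)) (cexpi (1/h * tau z))).

Section Pairing.

Variables (h x xi yy ee : R) (tau : R -> R) (j : Z).
Hypothesis Hs : small_hbar h.
Hypothesis Htc : forall z, continuity_pt tau z.
Hypothesis Htp : forall z, tau (z + 1) = tau z.

Let F := pairing_integrand h x xi yy ee tau (IZR j).

Lemma pairing_integrand_eq z :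
  cmul (cconj (wavepacket h yy ee z)) (Fhat tau (1/h) (wavepacket h x xi) z) = F z.
Proof.
  unfold F, pairing_integrand, Fhat. rewrite wavepacket_doubling by auto.
  rewrite <- (wavepacket_shift_Z h x xi (2 * z - IZR j) j Hs). do 3 f_equal. ring.
Qed.

Lemma pairing_integrand_continuous z :
  continuity_pt (fun t => fst (F t)) z /\ continuity_pt (fun t => snd (F t)) z.
Proof.
  destruct (wavepacket_continuous h yy ee z Hs) as [Y1 Y2].
  assert (Hlin : continuity_pt (fun t => 2 * t - IZR j) z) by continuity_pt_auto.
  destruct (wavepacket_continuous h x xi (2 * z - IZR j) Hs) as [X1 X2].
  pose proof (continuity_pt_comp _ _ z Hlin X1) as X1'.
  pose proof (continuity_pt_comp _ _ z Hlin X2) as X2'.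
  pose proof (Htc z). unfold comp in X1', X2'.
  unfold F, pairing_integrand, cmul, cconj, cexpi; cbn [fst snd]. split; continuity_pt_auto.
Qed.

Lemma pairing_integrand_periodic z : F (z + 1) = F z.
Proof.
  unfold F, pairing_integrand. rewrite wavepacket_periodic, Htp by auto.
  replace (2 * (z + 1) - IZR j) with ((2 * z - IZR j) + INR 2) by (simpl; ring).
  rewrite wavepacket_shift_nat by auto. auto.
Qed.

Lemma cmod_inner_Fhat_le (T : R -> Cx) A eps :
  (forall z, A <= z <= A + 1 -> continuity_pt (fun t => fst (T t)) z /\ continuity_pt (fun t => snd (T t)) z) ->
  (forall z, A <= z <= A + 1 -> cnorm1 (csub (F z) (T z)) <= eps) ->
  cmod (inner (wavepacket h yy ee) (fun z => Fhat tau (1/h) (wavepacket h x xi) z)) <=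
  Rabs (RInt (fun t => fst (T t)) A (A + 1)) + Rabs (RInt (fun t => snd (T t)) A (A + 1)) + 2 * eps.
Proof.
  intros HT Heps.
  assert (Hr : forall p : Cx -> R, (forall z, continuity_pt (fun t => p (F t)) z) ->
    Rint (fun z => p (cmul (cconj (wavepacket h yy ee z)) (Fhat tau (1/h) (wavepacket h x xi) z))) 0 1
    = RInt (fun t => p (F t)) 0 1).
  { intros p Hc. rewrite Rint_RInt.
    - apply RInt_ext. intros; rewrite pairing_integrand_eq; auto.
    - apply (ex_RInt_ext (fun t => p (F t))). intros; rewrite pairing_integrand_eq; auto.
      apply ex_RInt_continuous_everywhere; auto. }
  eapply Rle_trans. apply cmod_le_cnorm1. unfold inner, cnorm1; cbn [fst snd].
  rewrite (Hr fst), (Hr snd) by (intros; apply pairing_integrand_continuous).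
  assert (Hcomp : forall p : Cx -> R, (p = fst \/ p = snd) ->
    Rabs (RInt (fun t => p (F t)) 0 1) <= Rabs (RInt (fun t => p (T t)) A (A + 1)) + eps).
  { intros p Hp. apply Rabs_RInt_periodic_le.
    - intros z. destruct Hp; subst; apply pairing_integrand_continuous.
    - intros z. rewrite pairing_integrand_periodic. auto.
    - intros z Hz. destruct Hp; subst; apply HT; auto.
    - intros z Hz. pose proof (Heps z Hz). unfold cnorm1, csub in H; cbn [fst snd] in H.
      pose proof (Rabs_pos (fst (F z) - fst (T z))). pose proof (Rabs_pos (snd (F z) - snd (T z))).
      destruct Hp; subst; lra. }
  pose proof (Hcomp fst (or_introl eq_refl)). pose proof (Hcomp snd (or_intror eq_refl)). lra.
Qed.

End Pairing.

(** * Replacing the wavepackets by their dominant Gaussian terms *)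

Lemma cnorm1_pairing_sub X Xt Y Yt e : cnorm1 e <= 2 ->
  cnorm1 (csub (cmul (cconj X) (cmul Y e)) (cmul (cconj Xt) (cmul Yt e))) <=
  2 * (cnorm1 (csub X Xt) * cnorm1 Y) + 2 * (cnorm1 Xt * cnorm1 (csub Y Yt)).
Proof.
  intros He.
  assert (Eq : csub (cmul (cconj X) (cmul Y e)) (cmul (cconj Xt) (cmul Yt e)) =
    cadd (cmul (cconj (csub X Xt)) (cmul Y e)) (cmul (cconj Xt) (cmul (csub Y Yt) e))).
  { destruct X, Xt, Y, Yt, e. unfold csub, cadd, cmul, cconj; simpl. f_equal; ring. }
  rewrite Eq. eapply Rle_trans. apply cnorm1_cadd.
  assert (G : forall P Q, cnorm1 (cmul (cconj P) (cmul Q e)) <= 2 * (cnorm1 P * cnorm1 Q)).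
  { intros P Q. eapply Rle_trans. apply cnorm1_cmul. rewrite cnorm1_cconj.
    pose proof (cnorm1_cmul Q e). pose proof (cnorm1_ge0 P). pose proof (cnorm1_ge0 Q).
    pose proof (cnorm1_ge0 e).
    assert (cnorm1 (cmul Q e) <= cnorm1 Q * 2) by nra. nra. }
  pose proof (G (csub X Xt) Y). pose proof (G Xt (csub Y Yt)). lra.
Qed.

Lemma exp_re_phase_eq h yy x J z : 0 < h ->
  exp (re_phase yy (J + x) z / h) = gauss h yy z 0 * gauss h x (2 * z - J) 0.
Proof.
  intros Hh. unfold gauss. rewrite <- exp_plus. f_equal. unfold re_phase. field. lra.
Qed.

Lemma wp_term_pairing_eq h yy ee x xi J (D : nat -> R -> R) z : 0 < h ->
  cmul (cconj (wp_term h yy ee z 0)) (cmul (wp_term h x xi (2 * z - J) 0) (cexpi (1/h * D 0%nat z)))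
  = model_integrand h yy (J + x) D ee xi J z.
Proof.
  intros Hh. unfold model_integrand. rewrite exp_re_phase_eq by auto.
  unfold wp_term, gauss, cexpi, cconj, cmul; cbn [fst snd].
  set (a := exp (- (z - 0 - yy) ^ 2 / (4 * h))).
  set (b := exp (- (2 * z - J - 0 - x) ^ 2 / (4 * h))).
  set (al := xi * (2 * z - J - 0) / h). set (be := ee * (z - 0) / h). set (ga := 1 / h * D 0%nat z).
  replace (im_phase D ee xi J z / h) with ((al + ga) - be) by (unfold al, be, ga, im_phase; field; lra).
  rewrite cos_minus, sin_minus, cos_plus, sin_plus. f_equal; ring.
Qed.

Lemma pairing_integrand_sub_model h x xi yy ee D J z K :
  small_hbar h -> exp (- (1/16) / h) <= 1/2 -> Rabs (z - yy) <= 3/4 -> Rabs (2 * z - J - x) <= 3 ->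
  (forall i : nat, (1 <= i)%nat ->
     gauss h yy z 0 * (gauss h x (2 * z - J) (INR i) + gauss h x (2 * z - J) (- INR i)) <= K * (1/2)^i) ->
  cnorm1 (csub (pairing_integrand h x xi yy ee (D 0%nat) J z) (model_integrand h yy (J + x) D ee xi J z))
    <= 544 * exp (- (1/64) / h) + 8 * K.
Proof.
  intros Hs Hq Hz Hu Hsep.
  rewrite <- wp_term_pairing_eq by apply Hs. unfold pairing_integrand.
  eapply Rle_trans. apply cnorm1_pairing_sub. apply cnorm1_cexpi.
  set (Y := wavepacket h x xi (2 * z - J)). set (Yt := wp_term h x xi (2 * z - J) 0).
  set (X := wavepacket h yy ee z). set (Xt := wp_term h yy ee z 0).
  pose proof (wavepacket_sub_center h yy ee z (proj1 Hs) Hq Hz) as H1.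
  pose proof (cnorm1_wavepacket_le h x xi (2 * z - J) Hs Hu) as H2.
  pose proof (cnorm1_wp_term h yy ee z 0) as H3.
  pose proof (wavepacket_sub_center_weighted h x xi (2 * z - J) _ K (gauss_pos h yy z 0) Hsep) as H4.
  fold X Xt Y Yt in H1, H2, H3, H4.
  pose proof (cnorm1_ge0 (csub X Xt)). pose proof (cnorm1_ge0 Y). pose proof (cnorm1_ge0 Xt).
  pose proof (cnorm1_ge0 (csub Y Yt)). pose proof (gauss_pos h yy z 0).
  assert (cnorm1 Xt * cnorm1 (csub Y Yt) <= 2 * (gauss h yy z 0 * cnorm1 (csub Y Yt))) by nra.
  assert (cnorm1 (csub X Xt) * cnorm1 Y <= 8 * exp (- (1/64) / h) * 34) by nra.
  nra.
Qed.

Lemma Int_part_eq t (m : Z) : IZR m <= t < IZR m + 1 -> Int_part t = m.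
Proof.
  intros H. unfold Int_part. rewrite <- (tech_up t (m + 1)).
  - lia.
  - rewrite plus_IZR. lra.
  - rewrite plus_IZR. lra.
Qed.

Lemma off_resonance_gap x y : 0 <= x < 1 -> 0 <= y < 1 -> doubling y <> x ->
  exists gamma, 0 < gamma <= 1 /\ forall m : Z, gamma <= Rabs (2 * y - x - IZR m).
Proof.
  intros Hx Hy Hd. set (w := 2 * y - x). set (f := frac_part w).
  assert (Hf : 0 < f < 1).
  { destruct (base_fp w) as [Hf0 Hf1]. split; [|exact Hf1].
    destruct Hf0 as [Hf0|Hf0]; auto. exfalso. apply Hd.
    unfold f, frac_part, w in Hf0. unfold doubling, frac_part.
    rewrite (Int_part_eq (2 * y) (Int_part (2 * y - x))); lra. }
  exists (Rmin f (1 - f)). split.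
  - split. apply Rmin_glb_lt; lra. pose proof (Rmin_r f (1 - f)). lra.
  - intros m. pose proof (Rmin_l f (1 - f)). pose proof (Rmin_r f (1 - f)).
    assert (Ew : w - IZR m = IZR (Int_part w - m) + f) by (unfold f, frac_part; rewrite minus_IZR; ring).
    rewrite Ew. destruct (Z_le_gt_dec m (Int_part w)) as [Hm|Hm].
    + apply IZR_le in Hm. rewrite minus_IZR, Rabs_pos_eq; lra.
    + assert (Int_part w - m <= -1)%Z by lia. apply IZR_le in H1.
      rewrite Rabs_left; lra.
Qed.

Lemma off_resonance_separation x y yy k gamma (i : nat) : 0 <= x < 1 -> 0 <= y < 1 -> 0 < gamma <= 1 ->
  gamma <= Rabs (2 * y - x - k) -> Rabs k = INR i -> Rabs (yy - y) <= gamma / 8 ->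
  gamma / 4 + INR (i - 3) / 2 <= Rabs (yy - (0 + k + x) / 2).
Proof.
  intros Hx Hy Hg Hk Hki Hyy.
  replace (yy - (0 + k + x) / 2) with ((yy - y) + (2 * y - x - k) / 2) by field.
  assert (Hwk : INR i - 2 <= Rabs (2 * y - x - k)).
  { rewrite <- Hki. pose proof (Rabs_triang_inv k (2 * y - x)). rewrite (Rabs_minus_sym k) in H.
    assert (Rabs (2 * y - x) < 2) by (apply Rabs_def1; lra). lra. }
  assert (T : Rabs (2 * y - x - k) / 2 - Rabs (yy - y) <= Rabs ((yy - y) + (2 * y - x - k) / 2)).
  { pose proof (Rabs_triang_inv ((2 * y - x - k)/2) (-(yy - y))).
    replace ((2 * y - x - k) / 2 - - (yy - y)) with ((yy - y) + (2 * y - x - k) / 2) in H by ring.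
    rewrite Rabs_Ropp in H. unfold Rdiv in *. rewrite Rabs_mult, (Rabs_pos_eq (/2)) in H by lra. lra. }
  destruct (Compare_dec.le_lt_dec i 3) as [Hi|Hi].
  - replace (i - 3)%nat with 0%nat by lia. simpl. lra.
  - rewrite minus_INR by lia. simpl INR at 2. lra.
Qed.

Lemma resonance_separation x y yy J k (i : nat) : 2 * y = J + x -> Rabs k = INR i -> (1 <= i)%nat ->
  Rabs (yy - y) <= 1/8 -> 3/8 + INR (i - 1) / 2 <= Rabs (yy - (J + k + x) / 2).
Proof.
  intros Hy Hk Hi Hyy.
  replace (yy - (J + k + x) / 2) with ((yy - y) - k / 2) by lra.
  rewrite minus_INR by lia. simpl INR.
  pose proof (Rabs_triang_inv (k/2) (yy - y)).
  replace (k / 2 - (yy - y)) with (-((yy - y) - k / 2)) in H by ring.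
  rewrite !Rabs_Ropp in H. unfold Rdiv in *. rewrite Rabs_mult, (Rabs_pos_eq (/2)) in H by lra. lra.
Qed.

Lemma Rabs_INR_opp (i : nat) : Rabs (INR i) = INR i /\ Rabs (- INR i) = INR i.
Proof. rewrite Rabs_Ropp. rewrite Rabs_pos_eq by apply pos_INR. auto. Qed.

(** * Off resonance: 2y <> x mod 1 *)

Lemma csub_0_r a : csub a (0, 0) = a.
Proof. destruct a; unfold csub; simpl; f_equal; ring. Qed.

Lemma RInt_fun0 a b : RInt (fun _ => 0) a b = 0.
Proof. rewrite RInt_const. exact (Rmult_0_r (b - a)). Qed.

Lemma pairing_integrand_off_resonance h x xi y yy ee D gamma z :
  0 <= x < 1 -> 0 <= y < 1 -> 0 < gamma <= 1 -> (forall m : Z, gamma <= Rabs (2 * y - x - IZR m)) ->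
  Rabs (yy - y) <= gamma / 8 -> y - 1/2 <= z <= y + 1/2 -> 0 < h -> h <= gamma / 40 ->
  cnorm1 (pairing_integrand h x xi yy ee (D 0%nat) 0 z) <=
    544 * exp (- (1/64) / h) + 144 * exp (- ((gamma/4)^2/5) / h).
Proof.
  intros Hx Hy Hg Hm Hyy Hz Hh Hhg.
  set (e3 := exp (- ((gamma/4)^2/5) / h)).
  assert (Hcross : forall (m : Z) (i : nat), Rabs (IZR m) = INR i ->
      gauss h yy z 0 * gauss h x (2 * z - 0) (IZR m) <= e3 * (8 * (1/2)^i)).
  { intros m i Hi. replace 8 with (2 ^ 3) by ring.
    apply gauss_product_bound; [lra | lra | apply exp_neg_div_le_half; lra |].
    apply (off_resonance_separation x y yy (IZR m) gamma i); auto. }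
  assert (Hsep : forall i : nat, (1 <= i)%nat ->
      gauss h yy z 0 * (gauss h x (2 * z - 0) (INR i) + gauss h x (2 * z - 0) (- INR i))
        <= (16 * e3) * (1/2)^i).
  { intros i _. destruct (Rabs_INR_opp i) as [Hp Hn].
    pose proof (Hcross (Z.of_nat i) i ltac:(rewrite <- INR_IZR_INZ; exact Hp)) as H1.
    pose proof (Hcross (- Z.of_nat i)%Z i ltac:(rewrite opp_IZR, <- INR_IZR_INZ; exact Hn)) as H2.
    rewrite <- INR_IZR_INZ in H1. rewrite opp_IZR, <- INR_IZR_INZ in H2. lra. }
  pose proof (pairing_integrand_sub_model h x xi yy ee D 0 z (16 * e3)
    ltac:(apply small_hbar_of; lra) ltac:(apply exp_neg_div_le_half; lra)
    ltac:(apply Rabs_le_between; apply Rabs_le_between in Hyy; lra)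
    ltac:(apply Rabs_le_between; lra) Hsep) as Hsub.
  assert (Hmodel : cnorm1 (model_integrand h yy (0 + x) D ee xi 0 z) <= 16 * e3).
  { eapply Rle_trans. apply cnorm1_model_integrand. rewrite exp_re_phase_eq by lra.
    pose proof (Hcross 0%Z 0%nat ltac:(rewrite Rabs_R0; auto)). simpl in H. lra. }
  pose proof (cnorm1_le_csub_add (pairing_integrand h x xi yy ee (D 0%nat) 0 z)
    (model_integrand h yy (0 + x) D ee xi 0 z)). lra.
Qed.

Lemma derivatives_continuous (D : nat -> R -> R) :
  (forall n t, derivable_pt_lim (D n) t (D (S n) t)) -> forall n z, continuity_pt (D n) z.
Proof. intros HD n z. apply derivable_continuous_pt. exists (D (S n) z). apply HD. Qed.

Lemma microlocally_small_off_resonance (D : nat -> R -> R) x xi y eta :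
  (forall n t, derivable_pt_lim (D n) t (D (S n) t)) -> (forall z, D 0%nat (z + 1) = D 0%nat z) ->
  0 <= x < 1 -> 0 <= y < 1 -> doubling y <> x ->
  microlocally_small (fun hbar z => Fhat (D 0%nat) (1 / hbar) (wavepacket hbar x xi) z) y eta.
Proof.
  intros HD Hper Hx Hy Hd.
  destruct (off_resonance_gap x y Hx Hy Hd) as [g [Hg Hm]].
  set (a1 := 1/64). set (a3 := (g/4)^2/5).
  assert (Ha3 : 0 < a3) by (unfold a3; pose proof (pow_lt (g/4) 2 ltac:(lra)); lra).
  exists (g / 8). split. lra. intros N.
  exists (2 * (544 * (INR N / a1) ^ N + 144 * (INR N / a3) ^ N)), (g / 40). split. lra.
  intros h yy ee [Hh Hhd] Hyy Hee.
  eapply Rle_trans.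
  - apply (cmod_inner_Fhat_le h x xi yy ee (D 0%nat) 0%Z (small_hbar_of h Hh ltac:(lra))
      (derivatives_continuous D HD 0%nat) Hper (fun _ => (0, 0)) (y - 1/2)
      (544 * exp (- a1 / h) + 144 * exp (- a3 / h))).
    + intros; split; apply continuity_pt_fconst.
    + intros z Hz. rewrite csub_0_r. apply (pairing_integrand_off_resonance h x xi y yy ee D g z); auto; lra.
  - cbn [fst snd]. rewrite !RInt_fun0, Rabs_R0.
    pose proof (exp_neg_div_le_pow a1 h N ltac:(unfold a1; lra) Hh).
    pose proof (exp_neg_div_le_pow a3 h N Ha3 Hh). lra.
Qed.

(** * On resonance: 2y = x mod 1 and eta <> 2 xi + tau'(y) *)

Lemma pairing_integrand_resonance_error h x xi y yy ee D J z :
  2 * y = J + x -> Rabs (yy - y) <= 1/8 -> y - 1/2 <= z <= y + 1/2 -> 0 < h -> h <= 3/80 ->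
  cnorm1 (csub (pairing_integrand h x xi yy ee (D 0%nat) J z) (model_integrand h yy (J + x) D ee xi J z))
    <= 544 * exp (- (1/64) / h) + 32 * exp (- ((3/8)^2/5) / h).
Proof.
  intros Hj Hyy Hz Hh Hh2.
  set (e2 := exp (- ((3/8)^2/5) / h)).
  assert (Hcross : forall k (i : nat), Rabs k = INR i -> (1 <= i)%nat ->
      gauss h yy z 0 * gauss h x (2 * z - J) k <= e2 * (2 * (1/2)^i)).
  { intros k i Hk Hi. replace 2 with (2 ^ 1) at 2 by ring.
    apply gauss_product_bound; [lra | lra | apply exp_neg_div_le_half; lra |].
    apply (resonance_separation x y); auto. }
  replace (32 * e2) with (8 * (4 * e2)) by ring.
  apply pairing_integrand_sub_model.
  - apply small_hbar_of; lra.
  - apply exp_neg_div_le_half; lra.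
  - apply Rabs_le_between. apply Rabs_le_between in Hyy. lra.
  - apply Rabs_le_between. lra.
  - intros i Hi. destruct (Rabs_INR_opp i) as [Hp Hn].
    pose proof (Hcross _ i Hp Hi). pose proof (Hcross _ i Hn Hi). lra.
Qed.

Lemma re_phase'_far yy y z d : Rabs (yy - y) <= d / 2 -> d < Rabs (z - y) ->
  2 * d <= Rabs (re_phase' yy (2 * y) z).
Proof.
  intros Hyy Hzy. unfold re_phase'.
  replace (- (z - yy) / 2 - (2 * z - 2 * y)) with (- (5/2) * (z - y) + (yy - y) / 2) by lra.
  pose proof (Rabs_triang_inv (- (5/2) * (z - y)) (- ((yy - y) / 2))).
  replace (- (5 / 2) * (z - y) - - ((yy - y) / 2)) with (- (5/2) * (z - y) + (yy - y) / 2) in H by ring.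
  rewrite Rabs_Ropp, Rabs_mult, Rabs_Ropp, (Rabs_pos_eq (5/2)) in H by lra.
  unfold Rdiv in H. rewrite Rabs_mult, (Rabs_pos_eq (/2)) in H by lra.
  pose proof (Rabs_pos (yy - y)). lra.
Qed.

Lemma im_phase'_near (D : nat -> R -> R) xi y eta ee z :
  Rabs (ee - eta) <= Rabs (eta - 2 * xi - D 1%nat y) / 4 ->
  Rabs (D 1%nat z - D 1%nat y) < Rabs (eta - 2 * xi - D 1%nat y) / 4 ->
  Rabs (eta - 2 * xi - D 1%nat y) / 2 <= Rabs (im_phase' D ee xi z).
Proof.
  intros Hee Hz. unfold im_phase'.
  replace (- ee + 2 * xi + D 1%nat z) with
    (- (eta - 2 * xi - D 1%nat y) - (ee - eta) + (D 1%nat z - D 1%nat y)) by ring.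
  pose proof (Rabs_triang_inv (- (eta - 2 * xi - D 1%nat y) - (ee - eta)) (- (D 1%nat z - D 1%nat y))).
  pose proof (Rabs_triang_inv (- (eta - 2 * xi - D 1%nat y)) (ee - eta)).
  rewrite !Rabs_Ropp in H, H0.
  replace (- (eta - 2 * xi - D 1%nat y) - (ee - eta) - - (D 1%nat z - D 1%nat y)) with
    (- (eta - 2 * xi - D 1%nat y) - (ee - eta) + (D 1%nat z - D 1%nat y)) in H by ring.
  lra.
Qed.

(* Near y the imaginary part of Phi' is close to 2 xi + tau'(y) - eta <> 0; away from y the real
   part is large. *)
Lemma phase'_bounded_away (D : nat -> R -> R) xi y eta c :
  continuity_pt (D 1%nat) y -> eta <> 2 * xi + D 1%nat y -> c = 2 * y ->
  exists r c0, 0 < r <= 1/8 /\ 0 < c0 /\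
    forall yy ee z, Rabs (yy - y) < r -> Rabs (ee - eta) < r ->
      c0 <= Rabs (re_phase' yy c z) \/ c0 <= Rabs (im_phase' D ee xi z).
Proof.
  intros Hc Heta Hcy. subst c.
  set (kap := Rabs (eta - 2 * xi - D 1%nat y)).
  assert (Hk : 0 < kap) by (apply Rabs_pos_lt; lra).
  destruct (Hc (kap / 4) ltac:(lra)) as [alp [Halp Hcont]].
  assert (Hc1 : forall z, Rabs (z - y) < alp -> Rabs (D 1%nat z - D 1%nat y) < kap / 4).
  { intros z Hz. destruct (Req_dec y z) as [<-|ne].
    - rewrite Rminus_diag, Rabs_R0. lra.
    - apply (Hcont z). split. split; [exact I | exact ne]. exact Hz. }
  set (d := Rmin (alp / 2) (1/4)).
  assert (Hd : 0 < d <= alp / 2) by (split; [apply Rmin_glb_lt; lra | apply Rmin_l]).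
  assert (Hd4 : d <= 1/4) by apply Rmin_r.
  exists (Rmin (kap / 4) (d / 2)), (Rmin (kap / 2) (2 * d)).
  pose proof (Rmin_l (kap / 4) (d / 2)). pose proof (Rmin_r (kap / 4) (d / 2)).
  pose proof (Rmin_l (kap / 2) (2 * d)). pose proof (Rmin_r (kap / 2) (2 * d)).
  split; [split; [apply Rmin_glb_lt|]; lra | split; [apply Rmin_glb_lt; lra |]].
  intros yy ee z Hyy Hee.
  destruct (Rle_lt_dec (Rabs (z - y)) d) as [Hzy|Hzy].
  - right. pose proof (im_phase'_near D xi y eta ee z ltac:(fold kap; lra) ltac:(apply Hc1; lra)).
    fold kap in H3. lra.
  - left. pose proof (re_phase'_far yy y z d ltac:(lra) Hzy). lra.
Qed.

Lemma uniform_derivative_bounds (D : nat -> R -> R) A B : A <= B -> (forall n z, continuity_pt (D n) z) ->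
  exists M : nat -> R, forall n, 0 <= M n /\ forall z, A <= z <= B -> Rabs (D n z) <= M n.
Proof.
  intros HAB Hc.
  assert (Hex : forall n, exists m, 0 <= m /\ forall z, A <= z <= B -> Rabs (D n z) <= m).
  { intros n. destruct (continuity_ab_maj (fun z => Rabs (D n z)) A B HAB) as [Mx [H1 H2]].
    - intros z _. apply (continuity_pt_comp (D n) Rabs); auto. apply Rcontinuity_abs.
    - exists (Rabs (D n Mx)). split; [apply Rabs_pos | auto]. }
  exists (fun n => epsilon (inhabits 0) (fun m => 0 <= m /\ forall z, A <= z <= B -> Rabs (D n z) <= m)).
  intros n. apply epsilon_spec, Hex.
Qed.

Lemma model_integral_rapid_decay (D : nat -> R -> R) xi y eta c r c0 :
  (forall n t, derivable_pt_lim (D n) t (D (S n) t)) -> c = 2 * y -> 0 < c0 ->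
  (forall yy ee z, Rabs (yy - y) < r -> Rabs (ee - eta) < r ->
     c0 <= Rabs (re_phase' yy c z) \/ c0 <= Rabs (im_phase' D ee xi z)) ->
  forall N, exists C, forall h yy ee J, 0 < h <= 1 -> Rabs (yy - y) < r -> Rabs (ee - eta) < r ->
    Rabs (RInt (fun t => fst (model_integrand h yy c D ee xi J t)) (y - 1/2) (y - 1/2 + 1)) +
    Rabs (RInt (fun t => snd (model_integrand h yy c D ee xi J t)) (y - 1/2) (y - 1/2 + 1)) <= C * h ^ N.
Proof.
  intros HD Hc Hc0 Hlow N.
  set (A := y - 1/2). set (a := 1/4).
  destruct (uniform_derivative_bounds D A (A + 1) ltac:(lra) (derivatives_continuous D HD)) as [M HM].
  exists (ibp_boundary_sum M (2 / c0) N * (INR N / a) ^ N + 4 * (A + 1 - A) * amp_bound M (2 / c0) N).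
  intros h yy ee J [Hh Hh1] Hyy Hee.
  assert (Hnz : forall z, re_phase' yy c z ^ 2 + im_phase' D ee xi z ^ 2 <> 0).
  { intros z. rewrite <- (pow2_abs (re_phase' yy c z)), <- (pow2_abs (im_phase' D ee xi z)).
    pose proof (pow2_ge_0 (Rabs (re_phase' yy c z))). pose proof (pow2_ge_0 (Rabs (im_phase' D ee xi z))).
    destruct (Hlow yy ee z Hyy Hee); nra. }
  assert (Hend : forall z, (z = A \/ z = A + 1) -> re_phase yy c z <= - a).
  { intros z Hz. unfold re_phase, a, A in *. subst c.
    pose proof (pow2_ge_0 (z - yy)). destruct Hz; subst z; nra. }
  apply (nonstationary_phase h yy c D ee xi J A (A + 1) Hh Hh1 ltac:(lra) HD (fun z _ => Hnz z)
           M (2 / c0) a (fun n z Hz => proj2 (HM n) z Hz) (fun n => proj1 (HM n))).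
  - intros z _. unfold inv_phase'. apply cnorm1_cinv; [exact Hc0 | cbn [fst snd]; apply Hlow; auto].
  - apply Rlt_le, Rdiv_lt_0_compat; lra.
  - intros z _. unfold re_phase. pose proof (pow2_ge_0 (z - yy)). pose proof (pow2_ge_0 (2 * z - c)). lra.
  - apply Hend; auto.
  - apply Hend; auto.
  - unfold a; lra.
Qed.

Lemma microlocally_small_resonance (D : nat -> R -> R) x xi y eta :
  (forall n t, derivable_pt_lim (D n) t (D (S n) t)) -> (forall z, D 0%nat (z + 1) = D 0%nat z) ->
  0 <= x < 1 -> 0 <= y < 1 -> doubling y = x -> eta <> 2 * xi + D 1%nat y ->
  microlocally_small (fun hbar z => Fhat (D 0%nat) (1 / hbar) (wavepacket hbar x xi) z) y eta.
Proof.
  intros HD Hper Hx Hy Hd Heta.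
  set (j := Int_part (2 * y)).
  assert (Hj : 2 * y = IZR j + x) by (unfold doubling, frac_part in Hd; fold j in Hd; lra).
  destruct (phase'_bounded_away D xi y eta (IZR j + x) (derivatives_continuous D HD 1%nat y) Heta
              ltac:(lra)) as [r [c0 [Hr [Hc0 Hlow]]]].
  exists r. split. lra. intros N.
  destruct (model_integral_rapid_decay D xi y eta (IZR j + x) r c0 HD ltac:(lra) Hc0 Hlow N) as [C HC].
  set (a1 := 1/64). set (a2 := (3/8)^2/5).
  exists (C + 2 * (544 * (INR N / a1) ^ N + 32 * (INR N / a2) ^ N)), (3/80). split. lra.
  intros h yy ee [Hh Hhd] Hyy Hee.
  eapply Rle_trans.
  - apply (cmod_inner_Fhat_le h x xi yy ee (D 0%nat) j (small_hbar_of h Hh ltac:(lra))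
      (derivatives_continuous D HD 0%nat) Hper (model_integrand h yy (IZR j + x) D ee xi (IZR j))
      (y - 1/2) (544 * exp (- a1 / h) + 32 * exp (- a2 / h))).
    + intros z _. eapply cderivable_lim_continuous, model_integrand_cderivable; auto.
    + intros z Hz. apply (pairing_integrand_resonance_error h x xi y); auto; lra.
  - pose proof (HC h yy ee (IZR j) ltac:(lra) Hyy Hee).
    pose proof (exp_neg_div_le_pow a1 h N ltac:(unfold a1; lra) Hh).
    pose proof (exp_neg_div_le_pow a2 h N ltac:(unfold a2; lra) Hh). lra.
Qed.

Theorem mainTheorem2 :
  forall (tau tau' : R -> R),
    smooth tau ->
    (forall z, tau (z + 1) = tau z) ->
    (forall z, derivable_pt_lim tau z (tau' z)) ->
  forall x xi : R, 0 <= x < 1 ->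
  forall y eta : R, 0 <= y < 1 ->
    (doubling y <> x \/ (doubling y = x /\ eta <> 2 * xi + tau' y)) ->
    ~ in_microsupport
        (fun hbar z => Fhat tau (1 / hbar) (wavepacket hbar x xi) z) y eta.
Proof.
  intros tau tau' [D [HD0 HD]] Hper Hder x xi Hx y eta Hy Hcase Hsupp.
  apply Hsupp. subst tau.
  destruct Hcase as [Hd | [Hd Heta]].
  - apply microlocally_small_off_resonance; auto.
  - apply microlocally_small_resonance; auto.
    rewrite <- (uniqueness_limite (D 0%nat) y (tau' y) (D 1%nat y) (Hder y) (HD 0%nat y)). exact Heta.
Qed.
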